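(* Let $\Omega\subset\mathbb{R}^n$ be a bounded, uniformly (strictly) convex domain with smooth boundary and diameter $d$, and $\rho(x)=\operatorname{dist}(x,\partial\Omega)$. Let $\tilde V\in C^1([-\tfrac d2,\tfrac d2])$ be even, $\tilde\phi_1>0$ the first Dirichlet eigenfunction of $-\tilde u''+\tilde V\tilde u=\tilde\lambda\tilde u$ on $(-\tfrac d2,\tfrac d2)$, $\tilde u(\pm\tfrac d2)=0$, and $\Phi(s):=2(\tilde\phi_1'/\tilde\phi_1)(s/2)$ for $s\in[0,d)$. Then there exist constants $\kappa=\kappa(n,\Omega)>0$ and $c_0=c_0(n,\Omega,\tilde V,\tilde\phi_1)$ such that for every $x\neq y$ in $\Omega$, with $X=|y-x|$ and $\tilde X=(y-x)/|y-x|$, $$\big[\nabla\log\rho^\kappa(y)-\nabla\log\rho^\kappa(x)\big]\cdot\tilde X\ \le\ \Phi(X)+c_0X.$$ *)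

(* classical reals. Points of R^n are represented as
   functions nat -> R whose coordinates of index >= n vanish (inRn). *)
From Stdlib Require Import Reals List.
Import ListNotations.
Open Scope R_scope.

Definition vec := nat -> R.

Fixpoint sumR (n : nat) (f : nat -> R) : R :=
  match n with O => 0 | S m => sumR m f + f m end.

Definition dot (n : nat) (x y : vec) : R := sumR n (fun i => x i * y i).
Definition vnorm (n : nat) (x : vec) : R := sqrt (dot n x x).
Definition vadd (x y : vec) : vec := fun i => x i + y i.
Definition vsub (x y : vec) : vec := fun i => x i - y i.
Definition vscale (t : R) (x : vec) : vec := fun i => t * x i.
Definition vdist (n : nat) (x y : vec) : R := vnorm n (vsub x y).
Definition unit_vec (i : nat) : vec := fun j => if Nat.eqb j i then 1 else 0.

Definition inRn (n : nat) (x : vec) : Prop := forall i, (n <= i)%nat -> x i = 0.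

Definition ball (n : nat) (p : vec) (r : R) (x : vec) : Prop :=
  inRn n x /\ vdist n x p < r.

Definition is_open (n : nat) (S : vec -> Prop) : Prop :=
  forall x, S x -> inRn n x /\
    exists r, 0 < r /\ forall y, ball n x r y -> S y.

Definition bounded_set (n : nat) (S : vec -> Prop) : Prop :=
  exists M, forall x, S x -> vnorm n x <= M.

Definition convex_set (S : vec -> Prop) : Prop :=
  forall x y t, S x -> S y -> 0 <= t <= 1 ->
    S (vadd (vscale (1 - t) x) (vscale t y)).

Definition boundary (n : nat) (S : vec -> Prop) (x : vec) : Prop :=
  inRn n x /\ forall r, 0 < r ->
    (exists y, S y /\ vdist n y x < r) /\
    (exists y, inRn n y /\ ~ S y /\ vdist n y x < r).

Definition diameter (n : nat) (S : vec -> Prop) (d : R) : Prop :=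
  is_lub (fun t => exists x y, S x /\ S y /\ t = vdist n x y) d.

Definition is_glb (E : R -> Prop) (m : R) : Prop :=
  (forall t, E t -> m <= t) /\ (forall b, (forall t, E t -> b <= t) -> b <= m).

Definition dist_to_boundary (n : nat) (Om : vec -> Prop) (rho : vec -> R) : Prop :=
  forall x, Om x -> is_glb (fun t => exists z, boundary n Om z /\ t = vdist n x z) (rho x).

Definition has_partial (f : vec -> R) (i : nat) (x : vec) (l : R) : Prop :=
  derivable_pt_lim (fun t => f (vadd x (vscale t (unit_vec i)))) 0 l.

Definition cont_at (n : nat) (f : vec -> R) (x : vec) : Prop :=
  forall eps, 0 < eps -> exists delta, 0 < delta /\
    forall y, ball n x delta y -> Rabs (f y - f x) < eps.

(* D al = iterated partial derivative of D [] along the multi-index al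
   (D (i :: al) = d_i (D al)); all of them exist and are continuous on U:
   D [] is C^infinity on U. *)
Definition smooth_family (n : nat) (U : vec -> Prop) (D : list nat -> vec -> R) : Prop :=
  forall al x, U x -> cont_at n (D al) x /\
    forall i, (i < n)%nat -> has_partial (D al) i x (D (i :: al) x).

(* Om has C^infinity boundary and is uniformly convex: near each boundary
   point p, Om is given by {F < 0} for a smooth local defining function F
   with nonvanishing gradient at p, and the second fundamental form
   D^2F(p)(xi,xi)/|grad F(p)| on tangent vectors xi is >= c |xi|^2 with
   c > 0 independent of p. *)
Definition smooth_uniformly_convex_boundary (n : nat) (Om : vec -> Prop) : Prop :=
  exists c, 0 < c /\ forall p, boundary n Om p ->
    exists r D, 0 < r /\ smooth_family n (ball n p r) D /\
      (exists i, (i < n)%nat /\ D [i] p <> 0) /\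
      (forall x, ball n p r x -> (Om x <-> D nil x < 0)) /\
      (forall xi, inRn n xi ->
         sumR n (fun i => D [i] p * xi i) = 0 ->
         sumR n (fun i => sumR n (fun j => D [j; i] p * xi i * xi j))
           >= c * vnorm n (fun i => D [i] p) * dot n xi xi).

Definition has_gradient (n : nat) (f : vec -> R) (x g : vec) : Prop :=
  forall eps, 0 < eps -> exists delta, 0 < delta /\
    forall y, ball n x delta y ->
      Rabs (f y - f x - dot n g (vsub y x)) <= eps * vdist n y x.

Definition cont_within (a b : R) (f : R -> R) (s : R) : Prop :=
  forall eps, 0 < eps -> exists delta, 0 < delta /\
    forall t, a <= t <= b -> Rabs (t - s) < delta -> Rabs (f t - f s) < eps.

Definition deriv_within (a b : R) (f : R -> R) (s l : R) : Prop :=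
  forall eps, 0 < eps -> exists delta, 0 < delta /\
    forall t, a <= t <= b -> Rabs (t - s) < delta ->
      Rabs (f t - f s - l * (t - s)) <= eps * Rabs (t - s).

Definition C1_on (a b : R) (f : R -> R) : Prop :=
  exists df, forall s, a <= s <= b ->
    deriv_within a b f s (df s) /\ cont_within a b df s.

Definition dirichlet_eigenpair (a : R) (V : R -> R) (lam : R)
    (u du ddu : R -> R) : Prop :=
  (forall s, -a <= s <= a -> cont_within (-a) a u s) /\
  u (-a) = 0 /\ u a = 0 /\
  (forall s, -a < s < a ->
     derivable_pt_lim u s (du s) /\ derivable_pt_lim du s (ddu s) /\
     - ddu s + V s * u s = lam * u s) /\
  (exists s, -a < s < a /\ u s <> 0).

Definition Phi_of (phi dphi : R -> R) (s : R) : R :=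
  2 * (dphi (s / 2) / phi (s / 2)).

(* Let [e] be the unit vector from [x] to [y], [X = |y - x|], and [al], [be] the slopes of
   [log rho] at [x] and [y] in the direction [e], so that the left-hand side is [kappa (be - al)].
   As [Om] is convex, [rho] is concave and lies below its tangent lines. Evaluating the tangent
   lines at [x] and [y] at the opposite endpoint gives [be <= al], which suffices when [X] stays
   away from [d], because [phi'(0) = 0] ([V] is even) makes [Phi(X) >= - C X] there.
   For almost-diametral chords, a compactness argument shows that [rho] at the midpoint stays
   above some [m0 > 0]: otherwise a limit chord of the closure would touch the boundary at its
   midpoint, which uniform convexity forbids. Evaluating the tangent lines at the midpoint, and
   using [rho x + rho y <= d - X], gives [kappa (be - al) <= 4 / m0 - 4 / (d - X)] for
   [kappa = d / (2 m0)], while [phi] vanishes linearly at [d / 2], so that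
   [Phi(X) >= - 4 / (d - X) - K]. *)

From Stdlib Require Import Reals Lra Lia FunctionalExtensionality List IndefiniteDescription Classical.
Import ListNotations.
Open Scope R_scope.

Ltac dcases := repeat match goal with
  | |- context [Rle_dec ?x ?y] => destruct (Rle_dec x y)
  | H : context [Rle_dec ?x ?y] |- _ => destruct (Rle_dec x y)
  | |- context [Rcase_abs ?x] => destruct (Rcase_abs x)
  | H : context [Rcase_abs ?x] |- _ => destruct (Rcase_abs x)
  end.

Ltac vext := apply functional_extensionality; intro;
  unfold vadd, vsub, vscale; first [ring | field; lra | field].

(** * Euclidean geometry of [vec] *)

Lemma sumR_ext n f g : (forall i, (i < n)%nat -> f i = g i) -> sumR n f = sumR n g.
Proof.
  induction n as [|n IH]; simpl; intros Hfg; auto.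
  rewrite IH, Hfg by (intros; apply Hfg || idtac; lia); auto.
Qed.

Lemma sumR_add n f g : sumR n (fun i => f i + g i) = sumR n f + sumR n g.
Proof. induction n; simpl; [lra | rewrite IHn; lra]. Qed.

Lemma sumR_scale n c f : sumR n (fun i => c * f i) = c * sumR n f.
Proof. induction n; simpl; [lra | rewrite IHn; lra]. Qed.

Lemma sumR_const0 n : sumR n (fun _ => 0) = 0.
Proof. induction n; simpl; [lra | rewrite IHn; lra]. Qed.

Lemma sumR_const n c : sumR n (fun _ => c) = INR n * c.
Proof. induction n; simpl sumR; [simpl; lra | rewrite IHn, S_INR; ring]. Qed.

Lemma sumR_le n f g : (forall i, (i < n)%nat -> f i <= g i) -> sumR n f <= sumR n g.
Proof.
  induction n as [|n IH]; simpl; intros Hfg; [lra|].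
  assert (f n <= g n) by (apply Hfg; lia).
  assert (sumR n f <= sumR n g) by (apply IH; intros; apply Hfg; lia). lra.
Qed.

Lemma sumR_ge0 n f : (forall i, (i < n)%nat -> 0 <= f i) -> 0 <= sumR n f.
Proof. intros Hf. rewrite <- (sumR_const0 n). apply sumR_le; auto. Qed.

Lemma sumR_gt0 n f i : (forall i, (i < n)%nat -> 0 <= f i) -> (i < n)%nat -> 0 < f i ->
  0 < sumR n f.
Proof.
  induction n as [|n IH]; simpl; intros Hf Hi Hfi; [lia|].
  assert (0 <= sumR n f) by (apply sumR_ge0; intros; apply Hf; lia).
  assert (0 <= f n) by (apply Hf; lia).
  destruct (Nat.eq_dec i n) as [->|Hne]; [lra|].
  assert (0 < sumR n f) by (apply IH; auto; lia). lra.
Qed.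

Lemma dot_sym n x y : dot n x y = dot n y x.
Proof. apply sumR_ext; intros; ring. Qed.

Lemma dot_self_ge0 n x : 0 <= dot n x x.
Proof. apply sumR_ge0; intros; nra. Qed.

Lemma dot_addl n x y z : dot n (vadd x y) z = dot n x z + dot n y z.
Proof. unfold dot, vadd. rewrite <- sumR_add. apply sumR_ext; intros; ring. Qed.

Lemma dot_scalel n c x z : dot n (vscale c x) z = c * dot n x z.
Proof. unfold dot, vscale. rewrite <- sumR_scale. apply sumR_ext; intros; ring. Qed.

Lemma dot_subl n x y z : dot n (vsub x y) z = dot n x z - dot n y z.
Proof.
  replace (vsub x y) with (vadd x (vscale (-1) y)) by vext.
  rewrite dot_addl, dot_scalel; ring.
Qed.

Lemma dot_scaler n c x z : dot n z (vscale c x) = c * dot n z x.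
Proof. rewrite dot_sym, dot_scalel, dot_sym; auto. Qed.

Lemma dot_addr n x y z : dot n z (vadd x y) = dot n z x + dot n z y.
Proof. rewrite dot_sym, dot_addl, !(dot_sym n z); auto. Qed.

Lemma dot_subr n x y z : dot n z (vsub x y) = dot n z x - dot n z y.
Proof. rewrite dot_sym, dot_subl, !(dot_sym n z); auto. Qed.

Lemma dot_self_eq0 n v : dot n v v = 0 -> forall i, (i < n)%nat -> v i = 0.
Proof.
  intros Hv i Hi. destruct (Req_dec (v i) 0) as [|Hvi]; auto. exfalso.
  assert (0 < dot n v v); [|lra].
  apply (sumR_gt0 n _ i); auto; [intros; nra|]. pose proof (Rsqr_pos_lt _ Hvi). unfold Rsqr in *; lra.
Qed.

Lemma vnorm_ge0 n x : 0 <= vnorm n x.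
Proof. apply sqrt_pos. Qed.

Lemma vnorm_sq n x : vnorm n x * vnorm n x = dot n x x.
Proof. apply sqrt_sqrt, dot_self_ge0. Qed.

Lemma vnorm_scale n c x : vnorm n (vscale c x) = Rabs c * vnorm n x.
Proof.
  unfold vnorm. rewrite dot_scalel, dot_scaler.
  replace (c * (c * dot n x x)) with (Rsqr (Rabs c) * dot n x x)
    by (rewrite <- Rsqr_abs; unfold Rsqr; ring).
  rewrite sqrt_mult_alt, sqrt_Rsqr; auto using Rabs_pos, Rle_0_sqr.
Qed.

Lemma dot_cauchy_schwarz n x y : Rabs (dot n x y) <= vnorm n x * vnorm n y.
Proof.
  pose proof (vnorm_sq n x). pose proof (vnorm_sq n y).
  pose proof (vnorm_ge0 n x). pose proof (vnorm_ge0 n y).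
  assert (Hquad : forall t, 0 <= dot n x x - 2 * t * dot n x y + t * t * dot n y y).
  { intro t. pose proof (dot_self_ge0 n (vsub x (vscale t y))) as Hnn.
    rewrite dot_subl, !dot_subr, !dot_scalel, !dot_scaler, (dot_sym n y x) in Hnn. lra. }
  rewrite <- (Rabs_right (vnorm n x * vnorm n y)) by nra.
  apply Rsqr_le_abs_0. unfold Rsqr. destruct (Req_dec (dot n y y) 0) as [Hy0|Hy0].
  - destruct (Req_dec (dot n x y) 0) as [->|Hxy]; [nra|].
    specialize (Hquad ((dot n x x + 1) / (2 * dot n x y))). rewrite Hy0 in Hquad.
    replace (2 * ((dot n x x + 1) / (2 * dot n x y)) * dot n x y) with (dot n x x + 1)
      in Hquad by (field; auto). lra.
  - assert (0 < dot n y y) by (pose proof (dot_self_ge0 n y); lra).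
    specialize (Hquad (dot n x y / dot n y y)).
    replace (dot n x x - 2 * (dot n x y / dot n y y) * dot n x y
      + dot n x y / dot n y y * (dot n x y / dot n y y) * dot n y y)
      with ((dot n x x * dot n y y - dot n x y * dot n x y) / dot n y y) in Hquad by (field; lra).
    assert (0 <= dot n x x * dot n y y - dot n x y * dot n x y); [|nra].
    apply Rmult_le_reg_r with (/ dot n y y); [apply Rinv_0_lt_compat; lra|]. lra.
Qed.

Lemma vnorm_triangle n x y : vnorm n (vadd x y) <= vnorm n x + vnorm n y.
Proof.
  pose proof (vnorm_ge0 n x). pose proof (vnorm_ge0 n y). pose proof (vnorm_ge0 n (vadd x y)).
  apply Rsqr_incr_0_var; [|nra]. unfold Rsqr. rewrite vnorm_sq, dot_addl, !dot_addr.
  pose proof (dot_cauchy_schwarz n x y). pose proof (Rle_abs (dot n x y)).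
  rewrite (dot_sym n y x). pose proof (vnorm_sq n x). pose proof (vnorm_sq n y). nra.
Qed.

Lemma vdist_triangle n x y z : vdist n x z <= vdist n x y + vdist n y z.
Proof.
  unfold vdist. replace (vsub x z) with (vadd (vsub x y) (vsub y z)) by vext.
  apply vnorm_triangle.
Qed.

Lemma vdist_sym n x y : vdist n x y = vdist n y x.
Proof.
  unfold vdist. replace (vsub y x) with (vscale (-1) (vsub x y)) by vext.
  rewrite vnorm_scale, Rabs_left by lra. ring.
Qed.

Lemma vdist_refl n x : vdist n x x = 0.
Proof.
  unfold vdist. replace (vsub x x) with (vscale 0 x) by vext.
  rewrite vnorm_scale, Rabs_R0. ring.
Qed.

Lemma coord_le_vnorm n x i : (i < n)%nat -> Rabs (x i) <= vnorm n x.
Proof.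
  intros Hi. rewrite <- (Rabs_right (vnorm n x)) by (apply Rle_ge, vnorm_ge0).
  apply Rsqr_le_abs_0. unfold Rsqr. rewrite vnorm_sq. unfold dot.
  induction n as [|n IH]; [lia|]. simpl. destruct (Nat.eq_dec i n) as [->|Hne].
  - assert (0 <= sumR n (fun i => x i * x i)) by (apply sumR_ge0; intros; nra). lra.
  - pose proof (IH ltac:(lia)). nra.
Qed.

Lemma vnorm_le_coord_bound n x eps : 0 <= eps ->
  (forall i, (i < n)%nat -> Rabs (x i) <= eps) -> vnorm n x <= INR n * eps.
Proof.
  intros Heps Hx. pose proof (vnorm_ge0 n x). pose proof (pos_INR n).
  apply Rsqr_incr_0_var; [|nra]. unfold Rsqr. rewrite vnorm_sq.
  assert (dot n x x <= INR n * (eps * eps)).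
  { rewrite <- sumR_const. apply sumR_le. intros i Hi. specialize (Hx i Hi).
    rewrite <- (Rabs_right (x i * x i)), Rabs_mult by nra. pose proof (Rabs_pos (x i)). nra. }
  destruct n; [simpl in *; lra|].
  assert (1 <= INR (S n)) by (rewrite S_INR; pose proof (pos_INR n); lra). nra.
Qed.

Lemma inRn_add n x y : inRn n x -> inRn n y -> inRn n (vadd x y).
Proof. unfold inRn, vadd; intros Hx Hy i Hi; rewrite Hx, Hy; auto; ring. Qed.

Lemma inRn_sub n x y : inRn n x -> inRn n y -> inRn n (vsub x y).
Proof. unfold inRn, vsub; intros Hx Hy i Hi; rewrite Hx, Hy; auto; ring. Qed.

Lemma inRn_scale n c x : inRn n x -> inRn n (vscale c x).
Proof. unfold inRn, vscale; intros Hx i Hi; rewrite Hx; auto; ring. Qed.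

Lemma vdist_gt0 n x y : inRn n x -> inRn n y -> x <> y -> 0 < vdist n y x.
Proof.
  intros Hx Hy Hxy. apply sqrt_lt_R0.
  destruct (Rle_lt_dec (dot n (vsub y x) (vsub y x)) 0) as [Hle|]; auto. exfalso.
  pose proof (dot_self_eq0 n (vsub y x) ltac:(pose proof (dot_self_ge0 n (vsub y x)); lra)) as H0.
  apply Hxy, functional_extensionality. intro i. destruct (Nat.lt_ge_cases i n).
  - specialize (H0 i ltac:(auto)). unfold vsub in H0. lra.
  - rewrite Hx, Hy; auto.
Qed.

Lemma vnorm_gt0_of_coord n v i : (i < n)%nat -> v i <> 0 -> 0 < vnorm n v.
Proof.
  intros Hi Hvi. apply sqrt_lt_R0, (sumR_gt0 n _ i); auto; [intros; nra|].
  pose proof (Rsqr_pos_lt _ Hvi). unfold Rsqr in *; lra.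
Qed.

Lemma ball_along n p w r tau : inRn n p -> inRn n w -> Rabs tau * vnorm n w < r ->
  ball n p r (vadd p (vscale tau w)).
Proof.
  intros Hp Hw Htau. split; [apply inRn_add; auto; apply inRn_scale; auto|].
  unfold vdist. replace (vsub (vadd p (vscale tau w)) p) with (vscale tau w) by vext.
  rewrite vnorm_scale. auto.
Qed.

Lemma ball_center n p r : inRn n p -> 0 < r -> ball n p r p.
Proof. intros. split; auto. rewrite vdist_refl. lra. Qed.

Definition line_at (x v : vec) (t : R) : vec := vadd x (vscale t v).

Lemma line_at0 x v : line_at x v 0 = x.
Proof. unfold line_at; vext. Qed.

Lemma vdist_line_at n x v s t :
  vdist n (line_at x v s) (line_at x v t) = Rabs (s - t) * vnorm n v.
Proof.
  unfold vdist. replace (vsub (line_at x v s) (line_at x v t)) with (vscale (s - t) v)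
    by (unfold line_at; vext).
  apply vnorm_scale.
Qed.

Lemma vdist_line_at_base n x v t : vdist n (line_at x v t) x = Rabs t * vnorm n v.
Proof. rewrite <- (line_at0 x v) at 2. rewrite vdist_line_at, Rminus_0_r. ring. Qed.

Lemma inRn_line_at n x v t : inRn n x -> inRn n v -> inRn n (line_at x v t).
Proof. intros; apply inRn_add; auto; apply inRn_scale; auto. Qed.

(** * One-variable calculus *)

Lemma dlim_eq f x l l' : derivable_pt_lim f x l -> l = l' -> derivable_pt_lim f x l'.
Proof. intros; subst; auto. Qed.

Lemma dlim_const c x : derivable_pt_lim (fun _ => c) x 0.
Proof. apply (derivable_pt_lim_const c). Qed.

Lemma dlim_id x : derivable_pt_lim (fun y => y) x 1.
Proof. apply derivable_pt_lim_id. Qed.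

Lemma dlim_plus f g x lf lg : derivable_pt_lim f x lf -> derivable_pt_lim g x lg ->
  derivable_pt_lim (fun y => f y + g y) x (lf + lg).
Proof. apply (derivable_pt_lim_plus f g). Qed.

Lemma dlim_minus f g x lf lg : derivable_pt_lim f x lf -> derivable_pt_lim g x lg ->
  derivable_pt_lim (fun y => f y - g y) x (lf - lg).
Proof. apply (derivable_pt_lim_minus f g). Qed.

Lemma dlim_mult f g x lf lg : derivable_pt_lim f x lf -> derivable_pt_lim g x lg ->
  derivable_pt_lim (fun y => f y * g y) x (lf * g x + f x * lg).
Proof. apply (derivable_pt_lim_mult f g). Qed.

Lemma dlim_div f g x lf lg : derivable_pt_lim f x lf -> derivable_pt_lim g x lg -> g x <> 0 ->
  derivable_pt_lim (fun y => f y / g y) x ((lf * g x - lg * f x) / (g x * g x)).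
Proof. apply (derivable_pt_lim_div f g). Qed.

Lemma dlim_exp_comp f x l : derivable_pt_lim f x l ->
  derivable_pt_lim (fun y => exp (f y)) x (exp (f x) * l).
Proof. intros. apply (derivable_pt_lim_comp f exp); auto. apply derivable_pt_lim_exp. Qed.

Lemma dlim_sum n (f : nat -> R -> R) l x :
  (forall i, (i < n)%nat -> derivable_pt_lim (f i) x (l i)) ->
  derivable_pt_lim (fun t => sumR n (fun i => f i t)) x (sumR n l).
Proof.
  induction n as [|n IH]; intros Hf; simpl; [apply dlim_const|].
  apply (dlim_plus (fun t => sumR n (fun i => f i t)) (f n)); [apply IH|]; intros; apply Hf; lia.
Qed.

Lemma dlim_comp_opp f x l : derivable_pt_lim f (- x) l ->
  derivable_pt_lim (fun y => f (- y)) x (- l).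
Proof.
  intros Hd eps Heps. destruct (Hd eps Heps) as [del Hdel]. exists del. intros h Hh Hh2.
  replace (- (x + h)) with (- x + - h) by ring.
  replace ((f (- x + - h) - f (- x)) / h - - l)
    with (- ((f (- x + - h) - f (- x)) / - h - l)) by (field; auto).
  rewrite Rabs_Ropp. apply Hdel; [lra | rewrite Rabs_Ropp; auto].
Qed.

Lemma dlim_shift f c l : derivable_pt_lim (fun s => f (c + s)) 0 l -> derivable_pt_lim f c l.
Proof.
  intros Hd eps Heps. destruct (Hd eps Heps) as [del Hdel]. exists del. intros h Hh Hh2.
  specialize (Hdel h Hh Hh2). rewrite Rplus_0_l, Rplus_0_r in Hdel. auto.
Qed.

Lemma Rdiv_le_compat x y z w : 0 < w -> w <= y -> 0 <= x -> x <= z -> x / y <= z / w.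
Proof.
  intros. unfold Rdiv. apply Rmult_le_compat; auto.
  - left; apply Rinv_0_lt_compat; lra.
  - apply Rinv_le_contravar; auto.
Qed.

Lemma cont_within_bounded a b f : a <= b -> (forall s, a <= s <= b -> cont_within a b f s) ->
  exists B, forall s, a <= s <= b -> Rabs (f s) <= B.
Proof.
  intros Hab Hc. set (cl := fun s => Rmax a (Rmin b s)).
  assert (Hcl : forall s, a <= cl s <= b).
  { intros; unfold cl; split; [apply Rmax_l|apply Rmax_lub; auto; apply Rmin_l]. }
  assert (Hcl_id : forall s, a <= s <= b -> cl s = s).
  { intros; unfold cl. rewrite Rmin_right, Rmax_right; lra. }
  assert (Hlip : forall s t, Rabs (cl t - cl s) <= Rabs (t - s)).
  { intros; unfold cl, Rmax, Rmin, Rabs; dcases; lra. }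
  set (g := fun s => f (cl s)).
  assert (Hg : forall c, continuity_pt g c).
  { intros c eps Heps. destruct (Hc (cl c) (Hcl c) eps Heps) as [del [Hdel Ht]].
    exists del; split; auto. intros y [_ Hy]. apply Ht; [apply Hcl|].
    eapply Rle_lt_trans; [apply Hlip|apply Hy]. }
  destruct (continuity_ab_maj g a b Hab (fun c _ => Hg c)) as [M [HM _]].
  destruct (continuity_ab_min g a b Hab (fun c _ => Hg c)) as [m [Hm _]].
  exists (Rmax (Rabs (g M)) (Rabs (g m))). intros s Hs.
  specialize (HM s Hs). specialize (Hm s Hs). unfold g in *. rewrite (Hcl_id s Hs) in HM, Hm.
  clear -HM Hm. unfold Rmax, Rabs in *; dcases; lra.
Qed.

Lemma deriv_within_cont a b f s l : deriv_within a b f s l -> cont_within a b f s.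
Proof.
  intros Hd eps Heps. destruct (Hd 1 ltac:(lra)) as [del [Hdel Ht]].
  pose proof (Rabs_pos l).
  exists (Rmin del (eps / (Rabs l + 1))). split.
  { apply Rmin_pos; auto. apply Rdiv_lt_0_compat; lra. }
  intros t Ht1 Ht2. specialize (Ht t Ht1 (Rlt_le_trans _ _ _ Ht2 (Rmin_l _ _))).
  pose proof (Rmin_r del (eps / (Rabs l + 1))).
  assert (Rabs (t - s) * (Rabs l + 1) < eps).
  { apply Rlt_le_trans with (eps / (Rabs l + 1) * (Rabs l + 1)).
    - apply Rmult_lt_compat_r; lra.
    - right; field; lra. }
  pose proof (Rabs_triang (f t - f s - l * (t - s)) (l * (t - s))) as Htri.
  rewrite Rabs_mult in Htri.
  replace (f t - f s - l * (t - s) + l * (t - s)) with (f t - f s) in Htri by ring. nra.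
Qed.

Lemma local_max_deriv_zero g G0 tau0 : 0 < tau0 ->
  (forall tau, Rabs tau <= tau0 -> g tau <= g 0) -> derivable_pt_lim g 0 G0 -> G0 = 0.
Proof.
  intros Htau0 Hmax Hg.
  apply (deriv_maximum g (- tau0) tau0 0 (exist _ G0 Hg)); try lra.
  intros x Hx1 Hx2. apply Hmax. unfold Rabs; dcases; lra.
Qed.

Lemma second_deriv_pos_increase g G Q tau0 : 0 < tau0 ->
  (forall tau, Rabs tau <= tau0 -> derivable_pt_lim g tau (G tau)) ->
  derivable_pt_lim G 0 Q -> G 0 = 0 -> 0 < Q -> exists t, 0 < t <= tau0 /\ g 0 < g t.
Proof.
  intros Htau0 Hg HG HG0 HQ. destruct (HG (Q / 2) ltac:(lra)) as [del Hdel].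
  pose proof (cond_pos del). pose proof (Rmin_l del tau0). pose proof (Rmin_r del tau0).
  set (t := Rmin del tau0 / 2).
  assert (Ht : 0 < t < Rmin del tau0) by (unfold t; assert (0 < Rmin del tau0) by (apply Rmin_pos; lra); lra).
  exists t. split; [lra|].
  destruct (MVT_cor2 g G 0 t ltac:(lra)) as [c [Hmvt Hc]].
  { intros c Hc. apply Hg. unfold Rabs; dcases; lra. }
  specialize (Hdel c ltac:(lra) ltac:(rewrite Rabs_right; lra)).
  rewrite Rplus_0_l, HG0, Rminus_0_r in Hdel.
  assert (G c / c > Q / 2) by (unfold Rabs in Hdel; dcases; lra).
  assert (0 < G c).
  { replace (G c) with (G c / c * c) by (field; lra). apply Rmult_lt_0_compat; lra. }
  nra.
Qed.

Lemma chord_le_tangent f D s : derivable_pt_lim f 0 D ->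
  (forall tau, 0 < tau <= 1 -> tau * (f s - f 0) <= f (tau * s) - f 0) ->
  f s <= f 0 + s * D.
Proof.
  intros Hf Hchord. destruct (Req_dec s 0) as [->|Hs0]; [lra|].
  assert (Has : 0 < Rabs s) by (apply Rabs_pos_lt; auto).
  apply le_epsilon. intros eps Heps.
  set (E := eps / (Rabs s + 1)).
  assert (HE0 : 0 < E) by (apply Rdiv_lt_0_compat; lra).
  assert (HE : E * Rabs s <= eps).
  { apply Rle_trans with (E * (Rabs s + 1)); [apply Rmult_le_compat_l; lra|].
    right; unfold E; field; lra. }
  destruct (Hf E HE0) as [del Hdel].
  set (tau := Rmin 1 (del / (2 * Rabs s))).
  assert (Htau : 0 < tau <= 1).
  { split; [apply Rmin_pos; [lra | apply Rdiv_lt_0_compat; [apply cond_pos | lra]] | apply Rmin_l]. }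
  assert (Hts : Rabs (tau * s) < del).
  { rewrite Rabs_mult, Rabs_right by lra.
    apply Rle_lt_trans with (del / (2 * Rabs s) * Rabs s).
    - apply Rmult_le_compat_r; [lra | apply Rmin_r].
    - replace (del / (2 * Rabs s) * Rabs s) with (del / 2) by (field; lra).
      pose proof (cond_pos del). lra. }
  specialize (Hdel (tau * s) ltac:(apply Rmult_integral_contrapositive; split; lra) Hts).
  rewrite Rplus_0_l in Hdel. specialize (Hchord tau Htau).
  set (Q := (f (tau * s) - f 0) / (tau * s)) in Hdel.
  replace (f (tau * s) - f 0) with (tau * (Q * s)) in Hchord by (unfold Q; field; lra).
  assert (Q * s <= D * s + E * Rabs s).
  { destruct (Rle_lt_dec 0 s).
    - rewrite Rabs_right by lra. unfold Rabs in Hdel; dcases; nra.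
    - rewrite Rabs_left by lra. unfold Rabs in Hdel; dcases; nra. }
  assert (f s - f 0 <= Q * s) by (apply Rmult_le_reg_l with tau; lra).
  lra.
Qed.

(** * The first Dirichlet eigenfunction of an even potential *)

(* If [phi > 0] is small, [phi^2 + phi'^2] is not, and [phi'(s) (a - s) + phi(s) = O((a - s)^2)],
   then [phi' < 0] and [phi >= c r / 2], whence [phi'/phi >= - 1/r - 2M/c] with [r = a - s]. *)
Lemma log_deriv_from_expansion p q r c M : 0 < p -> 0 < r -> 0 < c -> 0 <= M ->
  p * p < c * c -> 2 * (c * c) <= p * p + q * q ->
  Rabs (q * r + p) <= M * (r * r) -> M * r <= c / 2 -> q / p >= - / r - 2 * M / c.
Proof.
  intros Hp Hr Hc HM Hpc Hen Hexp HMr.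
  assert (Hexp' : - (M * (r * r)) <= q * r + p <= M * (r * r)) by (unfold Rabs in Hexp; dcases; lra).
  assert (Hq : q < - c).
  { assert (q * r < M * r * r) by nra. assert (q < M * r) by nra.
    destruct (Rlt_le_dec q (- c)); auto. nra. }
  assert (Hpr : c * r / 2 <= p) by nra.
  assert (Hlow : q * r + p >= - (2 * M / c) * p * r).
  { assert (2 * M / c * p * r >= M * (r * r)); [|lra].
    apply Rle_ge. replace (M * (r * r)) with (2 * M / c * (c * r / 2) * r) by (field; lra).
    apply Rmult_le_compat_r; [lra|]. apply Rmult_le_compat_l; auto.
    apply Rmult_le_pos; [lra | left; apply Rinv_0_lt_compat; lra]. }
  set (l := q / p). assert (Hql : q = l * p) by (unfold l; field; lra). rewrite Hql in Hlow.
  assert (l * r + 1 + 2 * M / c * r >= 0) by (apply Rle_ge, Rmult_le_reg_r with p; nra).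
  apply Rle_ge, Rmult_le_reg_r with r; [lra|].
  replace ((- / r - 2 * M / c) * r) with (- 1 - 2 * M / c * r) by (field; lra). lra.
Qed.

Section Eigenfunction.

Variables (a lam : R) (V phi dphi ddphi : R -> R).
Hypothesis a_gt0 : 0 < a.
Hypothesis V_cont : forall s, -a <= s <= a -> cont_within (-a) a V s.
Hypothesis V_even : forall s, -a <= s <= a -> V (-s) = V s.
Hypothesis eigenpair : dirichlet_eigenpair a V lam phi dphi ddphi.
Hypothesis phi_pos : forall s, -a < s < a -> 0 < phi s.

Lemma phi_ode s : -a < s < a ->
  derivable_pt_lim phi s (dphi s) /\ derivable_pt_lim dphi s (ddphi s) /\
  ddphi s = (V s - lam) * phi s.
Proof.
  intros Hs. destruct eigenpair as [_ [_ [_ [Hode _]]]].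
  destruct (Hode s Hs) as [H1 [H2 H3]]. repeat split; auto. lra.
Qed.

Lemma V_lam_bounded : exists L, 0 <= L /\ forall s, -a <= s <= a -> Rabs (V s - lam) <= L.
Proof.
  destruct (cont_within_bounded (-a) a V ltac:(lra) V_cont) as [B HB].
  exists (B + Rabs lam). split.
  - specialize (HB 0 ltac:(lra)). pose proof (Rabs_pos (V 0)). pose proof (Rabs_pos lam). lra.
  - intros s Hs. specialize (HB s Hs). pose proof (Rabs_triang (V s) (- lam)) as Ht.
    rewrite Rabs_Ropp in Ht. unfold Rminus; lra.
Qed.

Lemma phi_bounded : exists B, 0 <= B /\ forall s, -a <= s <= a -> Rabs (phi s) <= B.
Proof.
  destruct eigenpair as [Hc _].
  destruct (cont_within_bounded (-a) a phi ltac:(lra) Hc) as [B HB].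
  exists B. split; auto. specialize (HB 0 ltac:(lra)). pose proof (Rabs_pos (phi 0)). lra.
Qed.

Lemma ddphi_bounded : exists M, 0 <= M /\ forall s, -a < s < a -> Rabs (ddphi s) <= M.
Proof.
  destruct V_lam_bounded as [L [HL0 HL]]. destruct phi_bounded as [B [HB0 HB]].
  exists (L * B). split; [nra|]. intros s Hs.
  destruct (phi_ode s Hs) as [_ [_ ->]]. rewrite Rabs_mult.
  apply Rmult_le_compat; try apply Rabs_pos; [apply HL | apply HB]; lra.
Qed.

Lemma dphi_bounded : exists P, 0 <= P /\ forall s, -a < s < a -> Rabs (dphi s) <= P.
Proof.
  destruct ddphi_bounded as [M [HM0 HM]].
  exists (Rabs (dphi 0) + M * a). split; [pose proof (Rabs_pos (dphi 0)); nra|].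
  intros s Hs. destruct (MVT_abs dphi ddphi 0 s) as [c [Hc1 Hc2]].
  { intros c Hc. apply phi_ode. unfold Rmin, Rmax in Hc; dcases; lra. }
  assert (Hc : -a < c < a) by (unfold Rmin, Rmax in Hc2; dcases; lra).
  specialize (HM c Hc). pose proof (Rabs_pos (ddphi c)).
  assert (Rabs (s - 0) <= a) by (unfold Rabs; dcases; lra).
  pose proof (Rabs_triang (dphi s - dphi 0) (dphi 0)) as Ht.
  replace (dphi s - dphi 0 + dphi 0) with (dphi s) in Ht by ring.
  pose proof (Rabs_pos (s - 0)). nra.
Qed.

Lemma phi_small_near_ends eps : 0 < eps -> exists del, 0 < del /\
  forall s, a - del < s < a -> Rabs (phi s) < eps /\ Rabs (phi (-s)) < eps.
Proof.
  intros Heps. destruct eigenpair as [Hc [H0 [H1 _]]].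
  destruct (Hc a ltac:(lra) eps Heps) as [d1 [Hd1 Ht1]].
  destruct (Hc (-a) ltac:(lra) eps Heps) as [d2 [Hd2 Ht2]].
  exists (Rmin (Rmin d1 d2) a). split; [repeat apply Rmin_pos; auto|].
  intros s Hs. pose proof (Rmin_l (Rmin d1 d2) a). pose proof (Rmin_r (Rmin d1 d2) a).
  pose proof (Rmin_l d1 d2). pose proof (Rmin_r d1 d2). split.
  - specialize (Ht1 s ltac:(lra)). rewrite H1, Rminus_0_r in Ht1.
    apply Ht1. unfold Rabs; dcases; lra.
  - specialize (Ht2 (-s) ltac:(lra)). rewrite H0, Rminus_0_r in Ht2.
    apply Ht2. unfold Rabs; dcases; lra.
Qed.

(* The Wronskian of [phi] and [phi (- .)] is constant (both solve the same equation, as [V]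
   is even) and tends to 0 at the ends; at 0 it equals [- 2 phi 0 dphi 0]. *)
Lemma dphi0 : dphi 0 = 0.
Proof.
  destruct dphi_bounded as [P [HP0 HP]].
  set (W := fun s => - (phi s * dphi (- s)) - dphi s * phi (- s)).
  assert (HW' : forall s, -a < s < a -> derivable_pt_lim W s 0).
  { intros s Hs. destruct (phi_ode s Hs) as [d1 [d2 e2]].
    destruct (phi_ode (-s) ltac:(lra)) as [d3 [d4 e4]].
    eapply dlim_eq.
    - apply dlim_minus.
      + apply (derivable_pt_lim_opp (fun s => phi s * dphi (-s))).
        apply dlim_mult; [apply d1 | apply dlim_comp_opp, d4].
      + apply dlim_mult; [apply d2 | apply dlim_comp_opp, d3].
    - rewrite e2, e4, V_even by lra. ring. }
  assert (HWconst : forall s, 0 <= s < a -> W s = W 0).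
  { intros s Hs. destruct (Req_dec s 0) as [->|Hs0]; auto.
    destruct (MVT_cor2 W (fun _ => 0) 0 s) as [c [Hc _]]; [lra | intros; apply HW'; lra | lra]. }
  assert (HW0 : W 0 = 0).
  { cut (Rabs (W 0) <= 0); [unfold Rabs; dcases; lra|].
    apply le_epsilon. intros eps Heps. rewrite Rplus_0_l.
    destruct (phi_small_near_ends (eps / (2 * (P + 1)))) as [del [Hdel Hs]].
    { apply Rdiv_lt_0_compat; lra. }
    set (s := Rmax 0 (a - del / 2)).
    assert (0 <= s < a) by (unfold s, Rmax; dcases; lra).
    assert (a - del < s < a) by (unfold s, Rmax; dcases; lra).
    rewrite <- (HWconst s) by auto. destruct (Hs s ltac:(auto)) as [Hps Hpms]. unfold W.
    pose proof (HP s ltac:(lra)). pose proof (HP (-s) ltac:(lra)).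
    pose proof (Rabs_pos (phi s)). pose proof (Rabs_pos (phi (-s))).
    eapply Rle_trans; [apply Rabs_triang|]. rewrite !Rabs_Ropp, !Rabs_mult.
    apply Rle_trans with (eps / (2 * (P + 1)) * (2 * (P + 1))); [nra | right; field; lra]. }
  unfold W in HW0. rewrite Ropp_0 in HW0. pose proof (phi_pos 0 ltac:(lra)). nra.
Qed.

Lemma log_deriv_ge_linear b : 0 <= b < a ->
  exists C, forall s, 0 <= s <= b -> dphi s / phi s >= - C * s.
Proof.
  intros Hb. destruct phi_bounded as [B [_ HB]]. destruct ddphi_bounded as [M [_ HM]].
  destruct dphi_bounded as [P [_ HP]].
  destruct (continuity_ab_min phi 0 b ltac:(lra)) as [smin [Hmin Hsmin]].
  { intros c Hc. apply derivable_continuous_pt. exists (dphi c). apply (phi_ode c); lra. }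
  set (m := phi smin). assert (Hm : 0 < m) by (apply phi_pos; lra).
  set (C := (M * B + P * P) / (m * m)). exists C. intros s Hs.
  set (ddlog := fun c => (ddphi c * phi c - dphi c * dphi c) / (phi c * phi c)).
  assert (Hddlog : forall c, 0 <= c <= b -> Rabs (ddlog c) <= C).
  { intros c Hc. assert (Hpc : m <= phi c) by (apply Hmin; auto).
    unfold ddlog, Rdiv at 1. rewrite Rabs_mult, Rabs_inv, (Rabs_right (phi c * phi c)) by nra.
    apply Rdiv_le_compat; [nra | nra | apply Rabs_pos|].
    eapply Rle_trans; [apply Rabs_triang|]. rewrite Rabs_Ropp, !Rabs_mult.
    specialize (HM c ltac:(lra)). specialize (HB c ltac:(lra)). specialize (HP c ltac:(lra)).
    pose proof (Rabs_pos (ddphi c)). pose proof (Rabs_pos (phi c)). pose proof (Rabs_pos (dphi c)).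
    nra. }
  destruct (MVT_abs (fun y => dphi y / phi y) ddlog 0 s) as [c [Hc1 Hc2]].
  { intros c Hc. assert (Hca : -a < c < a) by (unfold Rmin, Rmax in Hc; dcases; lra).
    pose proof (phi_pos c Hca). destruct (phi_ode c Hca) as [d1 [d2 _]].
    apply dlim_div; auto; lra. }
  assert (Hc : 0 <= c <= b) by (unfold Rmin, Rmax in Hc2; dcases; lra).
  rewrite dphi0, Rdiv_0_l, Rminus_0_r, Rminus_0_r, (Rabs_right s) in Hc1 by lra.
  assert (Rabs (dphi s / phi s) <= C * s)
    by (rewrite Hc1; apply Rmult_le_compat_r; [lra | apply Hddlog; auto]).
  unfold Rabs in *; dcases; lra.
Qed.

(* [(phi^2 + dphi^2) e^{(1 + L) t}] is nondecreasing, since [|V - lam| <= L]. *)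
Lemma energy_lower_bound : exists E0, 0 < E0 /\
  forall t, 0 <= t < a -> E0 <= phi t * phi t + dphi t * dphi t.
Proof.
  destruct V_lam_bounded as [L [HL0 HL]].
  set (k := 1 + L).
  set (F := fun t => (phi t * phi t + dphi t * dphi t) * exp (k * t)).
  set (Fd := fun t => (2 * phi t * dphi t + 2 * dphi t * ddphi t) * exp (k * t)
                      + (phi t * phi t + dphi t * dphi t) * (k * exp (k * t))).
  assert (HF' : forall t, -a < t < a -> derivable_pt_lim F t (Fd t) /\ 0 <= Fd t).
  { intros t Ht. destruct (phi_ode t Ht) as [d1 [d2 e2]]. split.
    - eapply dlim_eq.
      + apply dlim_mult.
        * apply (dlim_plus (fun y => phi y * phi y) (fun y => dphi y * dphi y));
            apply dlim_mult; eassumption.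
        * apply (dlim_exp_comp (fun y => k * y)).
          apply (dlim_mult (fun _ => k) (fun y => y)); [apply dlim_const | apply dlim_id].
      + unfold Fd; ring.
    - unfold Fd. rewrite e2. pose proof (exp_pos (k * t)). specialize (HL t ltac:(lra)).
      set (u := V t - lam) in *. set (p := phi t). set (q := dphi t).
      assert (-L <= u <= L) by (unfold Rabs in HL; dcases; lra).
      assert (Hsos : 0 <= (2 + L + u) / 2 * ((p + q) * (p + q)) + (L - u) / 2 * ((p - q) * (p - q))).
      { apply Rplus_le_le_0_compat; apply Rmult_le_pos; try lra; apply Rle_0_sqr. }
      apply Rle_trans with (exp (k * t) * ((2 + L + u) / 2 * ((p + q) * (p + q))
                                           + (L - u) / 2 * ((p - q) * (p - q)))).
      + apply Rmult_le_pos; lra.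
      + right. unfold k. field. }
  assert (HFmono : forall t, 0 <= t < a -> F 0 <= F t).
  { intros t Ht. destruct (Req_dec t 0) as [->|Ht0]; [lra|].
    destruct (MVT_cor2 F Fd 0 t) as [c [Hc1 Hc2]]; [lra | intros; apply HF'; lra|].
    destruct (HF' c ltac:(lra)) as [_ Hc]. nra. }
  set (p0 := phi 0). assert (Hp0 : 0 < p0) by (apply phi_pos; lra).
  exists (p0 * p0 / exp (k * a)). split; [apply Rdiv_lt_0_compat; [nra | apply exp_pos]|].
  intros t Ht. specialize (HFmono t Ht). unfold F in HFmono.
  rewrite Rmult_0_r, exp_0, Rmult_1_r, dphi0 in HFmono.
  assert (exp (k * t) <= exp (k * a)).
  { destruct (Req_dec t a) as [->|]; [lra|]. left; apply exp_increasing. unfold k; nra. }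
  pose proof (exp_pos (k * t)).
  apply Rle_trans with (p0 * p0 / exp (k * t)); [apply Rdiv_le_compat; auto; nra|].
  apply Rmult_le_reg_r with (exp (k * t)); auto. unfold Rdiv.
  rewrite Rmult_assoc, Rinv_l by lra. unfold p0. nra.
Qed.

(* As [phi a = 0], this is the first-order Taylor expansion of [phi] at [a]. *)
Lemma phi_endpoint_expansion M : (forall s, -a < s < a -> Rabs (ddphi s) <= M) ->
  forall s, 0 <= s < a -> Rabs (dphi s * (a - s) + phi s) <= M * ((a - s) * (a - s)).
Proof.
  intros HM s Hs. destruct dphi_bounded as [P [HP0 HP]].
  apply le_epsilon. intros eps Heps.
  destruct (phi_small_near_ends (eps / 2) ltac:(lra)) as [del [Hdel Hsmall]].
  pose proof (Rmin_l del (eps / (2 * (P + 1)))). pose proof (Rmin_r del (eps / (2 * (P + 1)))).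
  set (r := Rmin del (eps / (2 * (P + 1)))) in *.
  assert (Hr : 0 < r) by (apply Rmin_pos; auto; apply Rdiv_lt_0_compat; lra).
  set (t := Rmax (a - r / 2) ((s + a) / 2)).
  assert (Ht : s < t < a) by (unfold t, Rmax; dcases; lra).
  assert (Htdel : a - del < t) by (unfold t, Rmax; dcases; lra).
  assert (Hteps : (a - t) * (P + 1) <= eps / 2).
  { apply Rle_trans with (eps / (2 * (P + 1)) * (P + 1)); [|right; field; lra].
    apply Rmult_le_compat_r; [lra|]. unfold t, Rmax; dcases; lra. }
  destruct (MVT_abs (fun y => dphi y * (a - y) + phi y) (fun y => ddphi y * (a - y)) s t)
    as [c [Hc1 Hc2]].
  { intros c Hc. assert (-a < c < a) by (unfold Rmin, Rmax in Hc; dcases; lra).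
    destruct (phi_ode c ltac:(auto)) as [d1 [d2 _]]. eapply dlim_eq.
    - apply (dlim_plus (fun y => dphi y * (a - y)) phi); [|exact d1].
      apply (dlim_mult dphi (fun y => a - y)); [exact d2|].
      apply (dlim_minus (fun _ => a) (fun y => y)); [apply dlim_const | apply dlim_id].
    - ring. }
  assert (Hc : s <= c <= t) by (unfold Rmin, Rmax in Hc2; dcases; lra).
  specialize (HM c ltac:(lra)). destruct (Hsmall t ltac:(lra)) as [Hpt _].
  specialize (HP t ltac:(lra)).
  assert (Hend : Rabs (dphi t * (a - t) + phi t) <= eps / 2 + eps / 2).
  { eapply Rle_trans; [apply Rabs_triang|]. rewrite Rabs_mult, (Rabs_right (a - t)) by lra. nra. }
  rewrite Rabs_mult, (Rabs_right (a - c)), (Rabs_right (t - s)) in Hc1 by lra.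
  pose proof (Rabs_pos (ddphi c)).
  assert (Rabs (ddphi c) * (a - c) * (t - s) <= M * ((a - s) * (a - s))).
  { apply Rle_trans with (M * (a - s) * (a - s)); [|right; ring].
    apply Rmult_le_compat; [nra | lra | apply Rmult_le_compat; lra | lra]. }
  pose proof (Rabs_triang (dphi s * (a - s) + phi s - (dphi t * (a - t) + phi t))
                          (dphi t * (a - t) + phi t)) as Htri.
  replace (dphi s * (a - s) + phi s - (dphi t * (a - t) + phi t) + (dphi t * (a - t) + phi t))
    with (dphi s * (a - s) + phi s) in Htri by ring.
  rewrite <- Rabs_Ropp in Hc1.
  replace (- (dphi t * (a - t) + phi t - (dphi s * (a - s) + phi s)))
    with (dphi s * (a - s) + phi s - (dphi t * (a - t) + phi t)) in Hc1 by ring.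
  lra.
Qed.

Lemma log_deriv_ge_near_end : exists eta K, 0 < eta < a /\
  forall s, a - eta <= s < a -> dphi s / phi s >= - / (a - s) - K.
Proof.
  destruct ddphi_bounded as [M [HM0 HM]].
  destruct energy_lower_bound as [E0 [HE0 Hen]].
  set (c := sqrt (E0 / 2)). assert (Hc : 0 < c) by (apply sqrt_lt_R0; lra).
  assert (Hcc : c * c = E0 / 2) by (apply sqrt_sqrt; lra).
  destruct (phi_small_near_ends c Hc) as [del [Hdel Hsmall]].
  set (eta := Rmin (a / 2) (Rmin (del / 2) (c / (2 * (M + 1))))).
  assert (Heta : 0 < eta) by (unfold eta; repeat apply Rmin_pos; try apply Rdiv_lt_0_compat; lra).
  assert (Heta_a : eta <= a / 2) by apply Rmin_l.
  assert (Heta_del : eta <= del / 2) by (eapply Rle_trans; [apply Rmin_r | apply Rmin_l]).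
  assert (HMeta : M * eta <= c / 2).
  { assert (eta <= c / (2 * (M + 1))) by (eapply Rle_trans; [apply Rmin_r | apply Rmin_r]).
    apply Rle_trans with ((M + 1) * (c / (2 * (M + 1)))); [|right; field; lra].
    apply Rmult_le_compat; lra. }
  exists eta, (2 * M / c). split; [lra|]. intros s Hs.
  destruct (Hsmall s ltac:(lra)) as [Hps _].
  apply log_deriv_from_expansion; try lra.
  - apply phi_pos; lra.
  - pose proof (Rabs_pos (phi s)).
    rewrite <- (Rabs_right (phi s * phi s)), Rabs_mult by nra. nra.
  - specialize (Hen s ltac:(lra)). lra.
  - apply (phi_endpoint_expansion M HM). lra.
  - apply Rle_trans with (M * eta); [apply Rmult_le_compat_l|]; lra.
Qed.

End Eigenfunction.

Lemma C1_on_cont a b f : C1_on a b f -> forall s, a <= s <= b -> cont_within a b f s.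
Proof.
  intros [df Hdf] s Hs. apply (deriv_within_cont a b f s (df s)). apply Hdf; auto.
Qed.

Section PhiBounds.

Variables (d lam : R) (V phi dphi ddphi : R -> R).
Hypothesis d_gt0 : 0 < d.
Hypothesis V_C1 : C1_on (- (d / 2)) (d / 2) V.
Hypothesis V_even : forall s, - (d / 2) <= s <= d / 2 -> V (- s) = V s.
Hypothesis eigenpair : dirichlet_eigenpair (d / 2) V lam phi dphi ddphi.
Hypothesis phi_pos : forall s, - (d / 2) < s < d / 2 -> 0 < phi s.

Lemma Phi_ge_linear b : 0 <= b < d ->
  exists C, forall X, 0 <= X <= b -> Phi_of phi dphi X >= - C * X.
Proof.
  intros Hb.
  destruct (log_deriv_ge_linear (d / 2) lam V phi dphi ddphi ltac:(lra) (C1_on_cont _ _ _ V_C1)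
              V_even eigenpair phi_pos (b / 2) ltac:(lra)) as [C HC].
  exists C. intros X HX. specialize (HC (X / 2) ltac:(lra)). unfold Phi_of. lra.
Qed.

Lemma Phi_ge_near_diameter : exists eta K, 0 < eta < d /\
  forall X, d - eta <= X < d -> Phi_of phi dphi X >= - 4 / (d - X) - K.
Proof.
  destruct (log_deriv_ge_near_end (d / 2) lam V phi dphi ddphi ltac:(lra) (C1_on_cont _ _ _ V_C1)
              V_even eigenpair phi_pos) as [eta [K [Heta HK]]].
  exists (2 * eta), (2 * K). split; [lra|]. intros X HX.
  specialize (HK (X / 2) ltac:(lra)). unfold Phi_of.
  replace (- 4 / (d - X)) with (2 * - / (d / 2 - X / 2)) by (field; lra). lra.
Qed.

End PhiBounds.

(** * The distance to the boundary of a convex domain *)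

Lemma ln_Rpower r k : ln (Rpower r k) = k * ln r.
Proof. apply ln_exp. Qed.

Section DistanceFunction.

Variables (n : nat) (Om : vec -> Prop) (rho : vec -> R).
Hypothesis Om_open : is_open n Om.
Hypothesis rho_dist : dist_to_boundary n Om rho.

Lemma boundary_notin z : boundary n Om z -> ~ Om z.
Proof.
  intros [Hz Hb] Hin. destruct (Om_open z Hin) as [_ [r [Hr Hball]]].
  destruct (Hb r Hr) as [_ [y [Hy1 [Hy2 Hy3]]]]. apply Hy2, Hball. split; auto.
Qed.

Lemma rho_le_vdist x z : Om x -> boundary n Om z -> rho x <= vdist n x z.
Proof. intros Hx Hz. apply (proj1 (rho_dist x Hx)). exists z; auto. Qed.

Lemma rho_ge_ball_radius x r : Om x -> 0 < r -> (forall y, ball n x r y -> Om y) -> r <= rho x.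
Proof.
  intros Hx Hr Hball. apply (proj2 (rho_dist x Hx)).
  intros t [z [Hz ->]]. destruct (Rlt_le_dec (vdist n x z) r); auto.
  exfalso. apply (boundary_notin z Hz), Hball. split; [apply Hz | rewrite vdist_sym; auto].
Qed.

Lemma rho_pos x : Om x -> 0 < rho x.
Proof.
  intros Hx. destruct (Om_open x Hx) as [_ [r [Hr Hball]]].
  pose proof (rho_ge_ball_radius x r Hx Hr Hball). lra.
Qed.

Lemma boundary_near x eps : Om x -> rho x < eps -> exists z, boundary n Om z /\ vdist n x z < eps.
Proof.
  intros Hx Hlt. apply NNPP. intro Hno.
  assert (eps <= rho x); [|lra].
  apply (proj2 (rho_dist x Hx)). intros t [z [Hz ->]].
  apply Rnot_lt_le. intro. apply Hno. exists z; auto.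
Qed.

(* Take the supremum of the times at which the segment is in [Om]. *)
Lemma segment_meets_boundary x z : Om x -> inRn n z -> ~ Om z ->
  exists t, 0 <= t <= 1 /\ boundary n Om (line_at x (vsub z x) t).
Proof.
  intros Hx Hz Hnz. assert (HxR : inRn n x) by apply (Om_open x Hx).
  set (v := vsub z x). set (nv := vnorm n v). assert (Hnv : 0 <= nv) by apply vnorm_ge0.
  assert (HvR : inRn n v) by (apply inRn_sub; auto).
  assert (Hv1 : line_at x v 1 = z) by (unfold line_at, v; vext).
  set (S := fun t => 0 <= t <= 1 /\ Om (line_at x v t)).
  destruct (completeness S) as [ts [Hub Hlub]].
  { exists 1. intros t [Ht _]. lra. }
  { exists 0. split; [lra | rewrite line_at0; auto]. }
  assert (Hts : 0 <= ts <= 1).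
  { split; [apply Hub; split; [lra | rewrite line_at0; auto] | apply Hlub; intros t [Ht _]; lra]. }
  exists ts. split; auto. set (b := line_at x v ts).
  split; [apply inRn_line_at; auto|]. intros r Hr. split.
  - destruct (classic (exists t, S t /\ ts - r / (nv + 1) < t)) as [[t [Ht1 Ht2]]|Hno].
    + exists (line_at x v t). split; [apply Ht1|]. unfold b. rewrite vdist_line_at; fold nv.
      assert (t <= ts) by (apply Hub; auto). rewrite Rabs_left1 by lra.
      assert ((ts - t) * (nv + 1) < r).
      { apply Rlt_le_trans with (r / (nv + 1) * (nv + 1)); [apply Rmult_lt_compat_r; lra|].
        right; field; lra. }
      nra.
    + exfalso. assert (ts <= ts - r / (nv + 1)).
      { apply Hlub. intros t Ht. apply Rnot_lt_le. intro. apply Hno. exists t; auto. }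
      assert (0 < r / (nv + 1)) by (apply Rdiv_lt_0_compat; lra). lra.
  - destruct (classic (Om b)) as [Hb|Hb].
    + exfalso. destruct (Om_open b Hb) as [_ [r' [Hr' Hball]]].
      assert (Hts1 : ts < 1).
      { destruct (Req_dec ts 1) as [Heq|]; [|lra]. exfalso. apply Hnz.
        rewrite <- Hv1, <- Heq. auto. }
      set (t' := Rmin 1 (ts + r' / (2 * (nv + 1)))).
      assert (0 < r' / (2 * (nv + 1))) by (apply Rdiv_lt_0_compat; lra).
      assert (Ht' : ts < t' <= 1) by (unfold t', Rmin; dcases; lra).
      assert (S t'); [|pose proof (Hub t' ltac:(auto)); lra].
      split; [lra|]. apply Hball. split; [apply inRn_line_at; auto|].
      unfold b. rewrite vdist_line_at, Rabs_right by lra; fold nv.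
      assert ((t' - ts) * (nv + 1) <= r' / 2); [|nra].
      apply Rle_trans with (r' / (2 * (nv + 1)) * (nv + 1)); [|right; field; lra].
      apply Rmult_le_compat_r; [lra|]. unfold t', Rmin; dcases; lra.
    + exists b. split; [apply inRn_line_at; auto|]. split; auto. rewrite vdist_refl. lra.
Qed.

Lemma ball_rho_sub x z : Om x -> inRn n z -> vdist n z x < rho x -> Om z.
Proof.
  intros Hx Hz Hd. apply NNPP. intro Hnz.
  destruct (segment_meets_boundary x z Hx Hz Hnz) as [t [Ht Hb]].
  pose proof (rho_le_vdist x _ Hx Hb) as Hle.
  rewrite vdist_sym, vdist_line_at_base, Rabs_right in Hle by lra.
  pose proof (vnorm_ge0 n (vsub z x)). fold (vdist n z x) in *. nra.
Qed.

Lemma ball_rho_scaled_sub x h R0 : Om x -> inRn n h -> 0 < R0 -> vnorm n h < R0 ->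
  Om (vadd x (vscale (rho x / R0) h)).
Proof.
  intros Hx Hh HR Hhn. pose proof (rho_pos x Hx).
  apply (ball_rho_sub x); [auto | apply inRn_add; [apply (Om_open x Hx) | apply inRn_scale; auto]|].
  unfold vdist. replace (vsub (vadd x (vscale (rho x / R0) h)) x) with (vscale (rho x / R0) h) by vext.
  rewrite vnorm_scale, Rabs_right by (apply Rle_ge, Rlt_le, Rdiv_lt_0_compat; lra).
  apply Rlt_le_trans with (rho x / R0 * R0); [apply Rmult_lt_compat_l; auto; apply Rdiv_lt_0_compat; lra|].
  right; field; lra.
Qed.

Lemma vdist_le_diameter d x y : diameter n Om d -> Om x -> Om y -> vdist n x y <= d.
Proof. intros [Hub _] Hx Hy. apply Hub. exists x, y; auto. Qed.

(* The segment from [x] to [y] extends inside [Om] by almost [rho x] and [rho y] on either side. *)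
Lemma dist_add_rho_le_diameter d x e X : diameter n Om d -> Om x -> Om (line_at x e X) ->
  inRn n e -> vnorm n e = 1 -> 0 <= X -> X + rho x + rho (line_at x e X) <= d.
Proof.
  intros Hd Hx Hy He He1 HX. set (y := line_at x e X) in *.
  pose proof (rho_pos x Hx). pose proof (rho_pos y Hy).
  assert (HxR : inRn n x) by apply (Om_open x Hx).
  assert (Hext : forall s s', 0 <= s < rho x -> 0 <= s' < rho y -> X + s + s' <= d).
  { intros s s' Hs Hs'.
    assert (Hleft : Om (line_at x e (- s))).
    { apply (ball_rho_sub x); auto; [apply inRn_line_at; auto|].
      rewrite vdist_line_at_base, He1, Rabs_Ropp, Rabs_right; lra. }
    assert (Hright : Om (line_at x e (X + s'))).
    { apply (ball_rho_sub y); auto; [apply inRn_line_at; auto|].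
      unfold y. rewrite vdist_line_at, He1. fold y. replace (X + s' - X) with s' by ring.
      rewrite Rabs_right; lra. }
    pose proof (vdist_le_diameter d _ _ Hd Hright Hleft) as Hdd.
    rewrite vdist_line_at, He1, Rabs_right in Hdd by lra. lra. }
  destruct (Rle_dec (X + rho x + rho y) d) as [|Hgt]; auto. exfalso.
  set (m := Rmin (Rmin (rho x) (rho y)) (X + rho x + rho y - d) / 4).
  assert (0 < m) by (unfold m; apply Rdiv_lt_0_compat; [repeat apply Rmin_pos|]; lra).
  assert (m <= rho x / 2 /\ m <= rho y / 2 /\ 4 * m <= X + rho x + rho y - d)
    by (unfold m, Rmin; dcases; lra).
  specialize (Hext (rho x - m) (rho y - m) ltac:(lra) ltac:(lra)). lra.
Qed.

Hypothesis Om_convex : convex_set Om.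

(* The ball of radius [(1-t) rho x + t rho y] about [(1-t) x + t y] is the convex combination
   of the balls [B(x, rho x)] and [B(y, rho y)]. *)
Lemma rho_concave x y t : Om x -> Om y -> 0 <= t <= 1 ->
  (1 - t) * rho x + t * rho y <= rho (vadd (vscale (1 - t) x) (vscale t y)).
Proof.
  intros Hx Hy Ht. pose proof (rho_pos x Hx). pose proof (rho_pos y Hy).
  set (R0 := (1 - t) * rho x + t * rho y). assert (HR : 0 < R0) by (unfold R0; nra).
  set (w := vadd (vscale (1 - t) x) (vscale t y)).
  apply (rho_ge_ball_radius w R0); [apply Om_convex; auto | auto|].
  intros z [Hz Hzd]. set (h := vsub z w).
  assert (HhR : inRn n h).
  { apply inRn_sub; auto. apply inRn_add; apply inRn_scale; [apply (Om_open x) | apply (Om_open y)]; auto. }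
  replace z with (vadd (vscale (1 - t) (vadd x (vscale (rho x / R0) h)))
                       (vscale t (vadd y (vscale (rho y / R0) h)))).
  - apply Om_convex; auto; apply ball_rho_scaled_sub; auto.
  - apply functional_extensionality; intro i. unfold h, w, vadd, vscale, vsub.
    unfold R0 in *. field. lra.
Qed.

Lemma rho_line_le_tangent kappa x e g s : 0 < kappa -> Om x -> inRn n e -> vnorm n e = 1 ->
  has_gradient n (fun z => ln (Rpower (rho z) kappa)) x g -> Om (line_at x e s) ->
  rho (line_at x e s) <= rho x + s * (rho x * (dot n g e / kappa)).
Proof.
  intros Hk Hx He He1 Hg Hs.
  assert (HxR : inRn n x) by apply (Om_open x Hx). pose proof (rho_pos x Hx) as Hrx.
  set (D := dot n g e / kappa).
  assert (Hlog : derivable_pt_lim (fun t => ln (rho (line_at x e t))) 0 D).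
  { intros eps Heps. destruct (Hg (eps * kappa / 2)) as [del [Hdel Hb]]; [nra|].
    exists (mkposreal del Hdel). intros t Ht Ht2. simpl in Ht2. rewrite Rplus_0_l, line_at0.
    specialize (Hb (line_at x e t)). rewrite !ln_Rpower in Hb.
    replace (vsub (line_at x e t) x) with (vscale t e) in Hb by (unfold line_at; vext).
    rewrite dot_scaler, vdist_line_at_base, He1, Rmult_1_r in Hb.
    assert (Hball : ball n x del (line_at x e t)).
    { split; [apply inRn_line_at; auto | rewrite vdist_line_at_base, He1, Rmult_1_r; auto]. }
    specialize (Hb Hball).
    replace ((ln (rho (line_at x e t)) - ln (rho x)) / t - D) with
      ((kappa * ln (rho (line_at x e t)) - kappa * ln (rho x) - t * dot n g e) / (kappa * t))
      by (unfold D; field; lra).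
    unfold Rdiv at 1. rewrite Rabs_mult, Rabs_inv, Rabs_mult, (Rabs_right kappa) by lra.
    assert (0 < Rabs t) by (apply Rabs_pos_lt; auto).
    apply Rle_lt_trans with (eps * kappa / 2 * Rabs t * / (kappa * Rabs t)).
    - apply Rmult_le_compat_r; auto. left; apply Rinv_0_lt_compat; nra.
    - replace (eps * kappa / 2 * Rabs t * / (kappa * Rabs t)) with (eps / 2) by (field; lra). lra. }
  assert (Htan : exp (ln (rho (line_at x e s))) <= exp (ln (rho (line_at x e 0))) + s * (rho x * D)).
  { apply (chord_le_tangent (fun t => exp (ln (rho (line_at x e t))))).
    - eapply dlim_eq; [apply dlim_exp_comp, Hlog|]. cbv beta. rewrite line_at0, exp_ln; auto.
    - intros tau Htau.
      replace (line_at x e (tau * s)) with (vadd (vscale (1 - tau) x) (vscale tau (line_at x e s)))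
        by (unfold line_at; vext).
      rewrite line_at0, !exp_ln by (apply rho_pos; first [assumption | apply Om_convex; auto; lra]).
      pose proof (rho_concave x (line_at x e s) tau Hx Hs ltac:(lra)). lra. }
  rewrite line_at0, !exp_ln in Htan by (apply rho_pos; auto). auto.
Qed.

End DistanceFunction.

(** * Sequential compactness *)

Lemma inv_INR_succ_pos k : 0 < / (INR k + 1).
Proof. apply Rinv_0_lt_compat. pose proof (pos_INR k). lra. Qed.

Lemma inv_INR_succ_le j k : (j <= k)%nat -> / (INR k + 1) <= / (INR j + 1).
Proof.
  intros Hjk. apply Rinv_le_contravar; [pose proof (pos_INR j); lra|].
  apply le_INR in Hjk. lra.
Qed.

Lemma inv_INR_succ_small eps : 0 < eps -> exists N, forall k, (N <= k)%nat -> / (INR k + 1) < eps.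
Proof.
  intros Heps. destruct (archimed_cor1 eps Heps) as [N [HN HN0]]. exists N. intros k Hk.
  apply Rle_lt_trans with (/ INR N); auto. apply Rinv_le_contravar; [apply lt_0_INR; auto|].
  apply le_INR in Hk. lra.
Qed.

Lemma strict_mono_lt (f : nat -> nat) : (forall k, (f k < f (S k))%nat) ->
  forall j k, (j < k)%nat -> (f j < f k)%nat.
Proof.
  intros Hf j k Hjk. induction k as [|k IH]; [lia|].
  destruct (Nat.eq_dec j k) as [->|]; auto. specialize (IH ltac:(lia)). specialize (Hf k). lia.
Qed.

Lemma strict_mono_ge_id (f : nat -> nat) : (forall k, (f k < f (S k))%nat) -> forall k, (k <= f k)%nat.
Proof. intros Hf k. induction k; [lia|]. specialize (Hf k). lia. Qed.

Lemma strict_mono_comp (f g : nat -> nat) : (forall k, (f k < f (S k))%nat) ->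
  (forall k, (g k < g (S k))%nat) -> forall k, (f (g k) < f (g (S k)))%nat.
Proof. intros Hf Hg k. apply strict_mono_lt; auto. Qed.

Lemma Un_cv_subseq (u : nat -> R) l (f : nat -> nat) :
  Un_cv u l -> (forall k, (k <= f k)%nat) -> Un_cv (fun k => u (f k)) l.
Proof.
  intros Hu Hf eps Heps. destruct (Hu eps Heps) as [N HN]. exists N.
  intros k Hk. apply HN. specialize (Hf k). lia.
Qed.

Lemma bolzano_weierstrass_subseq (u : nat -> R) B : (forall k, Rabs (u k) <= B) ->
  exists f l, (forall k, (f k < f (S k))%nat) /\ Un_cv (fun k => u (f k)) l.
Proof.
  intros HB. destruct (Bolzano_Weierstrass u (fun c => -B <= c <= B) (compact_P3 (-B) B)) as [l Hl].
  { intros k. specialize (HB k). unfold Rabs in HB; dcases; lra. }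
  assert (Hnear : forall N k, exists p, (N <= p)%nat /\ Rabs (u p - l) < / (INR k + 1)).
  { intros N k. destruct (Hl (disc l (mkposreal _ (inv_INR_succ_pos k))) N) as [p [Hp1 Hp2]].
    - exists (mkposreal _ (inv_INR_succ_pos k)). intros y Hy; auto.
    - exists p; split; auto. }
  set (sel := fun N k => proj1_sig (constructive_indefinite_description _ (Hnear N k))).
  assert (Hsel : forall N k, (N <= sel N k)%nat /\ Rabs (u (sel N k) - l) < / (INR k + 1)).
  { intros. unfold sel. destruct constructive_indefinite_description; simpl; auto. }
  set (f := nat_rect (fun _ => nat) (sel 0%nat 0%nat) (fun k fk => sel (S fk) (S k))).
  exists f, l. split.
  - intros k. change (f (S k)) with (sel (S (f k)) (S k)).
    destruct (Hsel (S (f k)) (S k)); lia.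
  - intros eps Heps. destruct (inv_INR_succ_small eps Heps) as [N HN]. exists N. intros k Hk.
    unfold Rdist. apply Rlt_trans with (/ (INR k + 1)); auto.
    destruct k; [apply (Hsel 0%nat 0%nat) | apply (Hsel (S (f k)) (S k))].
Qed.

Lemma bolzano_weierstrass_coords N (u : nat -> vec) B :
  (forall k i, (i < N)%nat -> Rabs (u k i) <= B) ->
  exists f L, (forall k, (f k < f (S k))%nat) /\
    forall i, (i < N)%nat -> Un_cv (fun k => u (f k) i) (L i).
Proof.
  induction N as [|N IH]; intros HB.
  - exists (fun k => k), (fun _ => 0). split; intros; lia.
  - destruct IH as [f [L [Hf HL]]]; [intros; apply HB; lia|].
    destruct (bolzano_weierstrass_subseq (fun k => u (f k) N) B) as [g [l [Hg Hl]]];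
      [intros; apply HB; lia|].
    exists (fun k => f (g k)), (fun i => if Nat.eqb i N then l else L i). split.
    + apply strict_mono_comp; auto.
    + intros i Hi. destruct (Nat.eqb_spec i N) as [->|]; auto.
      apply (Un_cv_subseq (fun k => u (f k) i)); [apply HL; lia | apply strict_mono_ge_id; auto].
Qed.

Definition vseq_cv n (u : nat -> vec) (p : vec) : Prop :=
  forall eps, 0 < eps -> exists K, forall k, (K <= k)%nat -> vdist n (u k) p < eps.

Lemma vseq_cv_coords n (u : nat -> vec) p :
  (forall i, (i < n)%nat -> Un_cv (fun k => u k i) (p i)) -> vseq_cv n u p.
Proof.
  intros Hc eps Heps. pose proof (pos_INR n).
  set (e := eps / (INR n + 1)). assert (He : 0 < e) by (apply Rdiv_lt_0_compat; lra).
  assert (Hunif : forall m, (m <= n)%nat -> exists K, forall k, (K <= k)%nat ->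
            forall i, (i < m)%nat -> Rabs (u k i - p i) < e).
  { induction m as [|m IH]; intros Hm; [exists 0%nat; intros; lia|].
    destruct (IH ltac:(lia)) as [K1 HK1]. destruct (Hc m ltac:(lia) e He) as [K2 HK2].
    exists (Nat.max K1 K2). intros k Hk i Hi.
    destruct (Nat.eq_dec i m) as [->|]; [apply HK2; lia | apply HK1; lia]. }
  destruct (Hunif n (le_n n)) as [K HK]. exists K. intros k Hk.
  eapply Rle_lt_trans; [apply (vnorm_le_coord_bound n _ e); [lra|]|].
  - intros i Hi. left. apply HK; auto.
  - apply Rlt_le_trans with ((INR n + 1) * e); [apply Rmult_lt_compat_r; lra|].
    right; unfold e; field; lra.
Qed.

Lemma vseq_cv_subseq n (u : nat -> vec) p (f : nat -> nat) :
  vseq_cv n u p -> (forall k, (k <= f k)%nat) -> vseq_cv n (fun k => u (f k)) p.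
Proof.
  intros Hu Hf eps Heps. destruct (Hu eps Heps) as [K HK]. exists K.
  intros k Hk. apply HK. specialize (Hf k). lia.
Qed.

Lemma bounded_vseq_subseq_cv n (u : nat -> vec) B : (forall k, vnorm n (u k) <= B) ->
  exists f p, (forall k, (f k < f (S k))%nat) /\ inRn n p /\ vseq_cv n (fun k => u (f k)) p.
Proof.
  intros HB.
  destruct (bolzano_weierstrass_coords n u B) as [f [L [Hf HL]]].
  { intros k i Hi. eapply Rle_trans; [apply coord_le_vnorm; eauto | apply HB]. }
  exists f, (fun i => if Nat.ltb i n then L i else 0). split; [auto|split].
  - intros i Hi. destruct (Nat.ltb_spec i n); [lia | auto].
  - apply vseq_cv_coords. intros i Hi. destruct (Nat.ltb_spec i n); [apply HL; auto | lia].
Qed.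

Lemma vdist_convex_comb n x y p q s : 0 <= s <= 1 ->
  vdist n (vadd (vscale (1 - s) x) (vscale s y)) (vadd (vscale (1 - s) p) (vscale s q))
  <= (1 - s) * vdist n x p + s * vdist n y q.
Proof.
  intros Hs. unfold vdist.
  replace (vsub (vadd (vscale (1 - s) x) (vscale s y)) (vadd (vscale (1 - s) p) (vscale s q)))
    with (vadd (vscale (1 - s) (vsub x p)) (vscale s (vsub y q))) by vext.
  eapply Rle_trans; [apply vnorm_triangle|].
  rewrite !vnorm_scale, !Rabs_right by lra. lra.
Qed.
Lemma vseq_cv_convex_comb n X Y p q s : 0 <= s <= 1 -> vseq_cv n X p -> vseq_cv n Y q ->
  vseq_cv n (fun k => vadd (vscale (1 - s) (X k)) (vscale s (Y k))) (vadd (vscale (1 - s) p) (vscale s q)).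
Proof.
  intros Hs HX HY eps Heps.
  destruct (HX (eps / 2) ltac:(lra)) as [K1 HK1]. destruct (HY (eps / 2) ltac:(lra)) as [K2 HK2].
  exists (Nat.max K1 K2). intros k Hk. eapply Rle_lt_trans; [apply vdist_convex_comb; auto|].
  specialize (HK1 k ltac:(lia)). specialize (HK2 k ltac:(lia)).
  assert ((1 - s) * vdist n (X k) p <= (1 - s) * (eps / 2)) by (apply Rmult_le_compat_l; lra).
  assert (s * vdist n (Y k) q <= s * (eps / 2)) by (apply Rmult_le_compat_l; lra). lra.
Qed.


(** * Directional derivatives of smooth functions *)

Definition coord_trunc (j : nat) (w : vec) : vec := fun i => if Nat.ltb i j then w i else 0.

Lemma vnorm_coord_trunc_le n j w : vnorm n (coord_trunc j w) <= vnorm n w.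
Proof.
  apply sqrt_le_1_alt, sumR_le. intros i Hi. unfold coord_trunc.
  destruct (Nat.ltb i j); nra.
Qed.

Lemma inRn_coord_trunc n j w : inRn n w -> inRn n (coord_trunc j w).
Proof. intros Hw i Hi. unfold coord_trunc. destruct (Nat.ltb i j); auto. Qed.

Lemma coord_trunc_full n w : inRn n w -> coord_trunc n w = w.
Proof.
  intros Hw. apply functional_extensionality; intro i. unfold coord_trunc.
  destruct (Nat.ltb_spec i n); auto. rewrite Hw; auto; lia.
Qed.

Lemma inRn_unit_vec n j : (j < n)%nat -> inRn n (unit_vec j).
Proof. intros Hj i Hi. unfold unit_vec. destruct (Nat.eqb_spec i j); lia || reflexivity. Qed.

Lemma vnorm_unit_vec n j : (j < n)%nat -> vnorm n (unit_vec j) = 1.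
Proof.
  intros Hj. unfold vnorm. replace (dot n (unit_vec j) (unit_vec j)) with 1; [apply sqrt_1|].
  unfold dot, unit_vec. induction n as [|n IH]; [lia|]. simpl. destruct (Nat.eqb_spec n j) as [->|].
  - rewrite (sumR_ext j _ (fun _ => 0)), sumR_const0; [ring|].
    intros i Hi. destruct (Nat.eqb_spec i j); [lia | ring].
  - rewrite <- IH by lia. ring.
Qed.

Lemma coord_trunc_succ z t j w : vadd z (vscale t (coord_trunc (S j) w)) =
  vadd (vadd z (vscale t (coord_trunc j w))) (vscale (t * w j) (unit_vec j)).
Proof.
  apply functional_extensionality; intro i. unfold vadd, vscale, coord_trunc, unit_vec.
  destruct (Nat.ltb_spec i (S j)), (Nat.ltb_spec i j), (Nat.eqb_spec i j); subst; try lia; ring.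
Qed.

Lemma vnorm_coord_trunc_step n j w t c : (j < n)%nat -> Rabs c <= Rabs (t * w j) ->
  vnorm n (vadd (vscale t (coord_trunc j w)) (vscale c (unit_vec j))) <= 2 * Rabs t * vnorm n w.
Proof.
  intros Hj Hc. eapply Rle_trans; [apply vnorm_triangle|].
  rewrite !vnorm_scale, vnorm_unit_vec by lia. rewrite Rabs_mult in Hc.
  pose proof (vnorm_coord_trunc_le n j w). pose proof (coord_le_vnorm n w j Hj).
  pose proof (Rabs_pos t). nra.
Qed.

Section SmoothFamily.

Variables (n : nat) (p : vec) (r : R) (D : list nat -> vec -> R).
Hypothesis D_smooth : smooth_family n (ball n p r) D.

(* Mean value theorem along [e_j], with the partial derivative frozen at [z]. *)
Lemma partial_increment_near al j z eps : ball n p r z -> (j < n)%nat -> 0 < eps ->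
  exists del, 0 < del /\ forall z' b, inRn n z' ->
    (forall c, Rabs c <= Rabs b -> vdist n (vadd z' (vscale c (unit_vec j))) z < del) ->
    Rabs (D al (vadd z' (vscale b (unit_vec j))) - D al z' - b * D (j :: al) z) <= eps * Rabs b.
Proof.
  intros Hz Hj Heps. destruct (proj1 (D_smooth (j :: al) z Hz) eps Heps) as [dc [Hdc Hcont]].
  destruct Hz as [HzR Hzp].
  exists (Rmin dc (r - vdist n z p)). split; [apply Rmin_pos; lra|]. intros z' b Hz' Hnear.
  pose proof (Rmin_l dc (r - vdist n z p)). pose proof (Rmin_r dc (r - vdist n z p)).
  set (zc := fun c => vadd z' (vscale c (unit_vec j))).
  assert (Hin : forall c, Rabs c <= Rabs b -> ball n p r (zc c)).
  { intros c Hc. split; [apply inRn_add; auto; apply inRn_scale, inRn_unit_vec; auto|].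
    pose proof (vdist_triangle n (zc c) z p). pose proof (Hnear c Hc). unfold zc in *. lra. }
  assert (Hrange : forall c, Rmin 0 b <= c <= Rmax 0 b -> Rabs c <= Rabs b)
    by (intros c Hc; unfold Rmin, Rmax, Rabs in *; dcases; lra).
  destruct (MVT_abs (fun c => D al (zc c) - c * D (j :: al) z)
              (fun c => D (j :: al) (zc c) - D (j :: al) z) 0 b) as [c [Hmvt Hc]].
  { intros c Hc. apply dlim_minus.
    - apply dlim_shift. eapply derivable_pt_lim_ext.
      2: { apply (proj2 (D_smooth al _ (Hin c (Hrange c Hc))) j Hj). }
      intros s. unfold zc. f_equal. vext.
    - eapply dlim_eq; [apply (dlim_mult (fun c => c) (fun _ => D (j :: al) z));
                       [apply dlim_id | apply dlim_const]|]. ring. }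
  assert (Hzc0 : zc 0 = z') by (unfold zc; vext).
  cbv beta in Hmvt. rewrite Hzc0, Rminus_0_r, Rmult_0_l, Rminus_0_r in Hmvt.
  replace (D al (zc b) - b * D (j :: al) z - D al z')
    with (D al (zc b) - D al z' - b * D (j :: al) z) in Hmvt by ring.
  unfold zc in Hmvt at 1. rewrite Hmvt. apply Rmult_le_compat_r; [apply Rabs_pos|].
  left. apply Hcont. split; [apply (Hin c (Hrange c Hc))|].
  pose proof (Hnear c (Hrange c Hc)). unfold zc. lra.
Qed.

(* Chain rule along [w], adding one coordinate of [w] at a time. *)
Lemma dir_deriv_trunc al z w : ball n p r z -> inRn n w -> forall j, (j <= n)%nat ->
  forall eps, 0 < eps -> exists del, 0 < del /\ forall t, Rabs t < del ->
    Rabs (D al (vadd z (vscale t (coord_trunc j w))) - D al z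
          - t * sumR j (fun i => D (i :: al) z * w i)) <= eps * Rabs t.
Proof.
  intros Hz Hw j. induction j as [|j IH]; intros Hj eps Heps.
  - exists 1. split; [lra|]. intros t Ht.
    replace (vadd z (vscale t (coord_trunc 0 w))) with z
      by (apply functional_extensionality; intro i; unfold vadd, vscale, coord_trunc; simpl; ring).
    simpl. replace (D al z - D al z - t * 0) with 0 by ring. rewrite Rabs_R0.
    pose proof (Rabs_pos t); nra.
  - destruct (IH ltac:(lia) (eps / 2) ltac:(lra)) as [d1 [Hd1 H1]].
    set (aw := Rabs (w j) + 1). assert (Haw : 1 <= aw) by (unfold aw; pose proof (Rabs_pos (w j)); lra).
    destruct (partial_increment_near al j z (eps / (2 * aw)) Hz ltac:(lia)) as [d2 [Hd2 H2]].
    { apply Rdiv_lt_0_compat; lra. }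
    set (C := vnorm n w + 1). assert (HC : 1 <= C) by (unfold C; pose proof (vnorm_ge0 n w); lra).
    exists (Rmin d1 (d2 / (2 * C))). split; [apply Rmin_pos; auto; apply Rdiv_lt_0_compat; lra|].
    intros t Ht. pose proof (Rmin_l d1 (d2 / (2 * C))). pose proof (Rmin_r d1 (d2 / (2 * C))).
    specialize (H1 t ltac:(lra)).
    set (z' := vadd z (vscale t (coord_trunc j w))) in *. set (b := t * w j).
    assert (Hnear : forall c, Rabs c <= Rabs b -> vdist n (vadd z' (vscale c (unit_vec j))) z < d2).
    { intros c Hc. unfold vdist.
      replace (vsub (vadd z' (vscale c (unit_vec j))) z)
        with (vadd (vscale t (coord_trunc j w)) (vscale c (unit_vec j))) by (unfold z'; vext).
      eapply Rle_lt_trans; [apply vnorm_coord_trunc_step; auto|].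
      pose proof (Rabs_pos t). pose proof (vnorm_ge0 n w).
      apply Rle_lt_trans with (Rabs t * (2 * C)); [unfold C; nra|].
      apply Rlt_le_trans with (d2 / (2 * C) * (2 * C)); [apply Rmult_lt_compat_r; lra|].
      right; field; lra. }
    assert (Hz'R : inRn n z').
    { apply inRn_add; [apply Hz | apply inRn_scale, inRn_coord_trunc; auto]. }
    specialize (H2 z' b Hz'R Hnear).
    rewrite coord_trunc_succ. fold z' b. simpl sumR.
    assert (Hb : eps / (2 * aw) * Rabs b <= eps / 2 * Rabs t).
    { unfold b. rewrite Rabs_mult. pose proof (Rabs_pos t).
      apply Rle_trans with (eps / (2 * aw) * (Rabs t * aw)).
      - apply Rmult_le_compat_l; [apply Rlt_le, Rdiv_lt_0_compat; lra|].
        apply Rmult_le_compat_l; auto. unfold aw; lra.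
      - right; field; lra. }
    replace (D al (vadd z' (vscale b (unit_vec j))) - D al z
             - t * (sumR j (fun i => D (i :: al) z * w i) + D (j :: al) z * w j))
      with ((D al (vadd z' (vscale b (unit_vec j))) - D al z' - b * D (j :: al) z)
            + (D al z' - D al z - t * sumR j (fun i => D (i :: al) z * w i))) by (unfold b; ring).
    eapply Rle_trans; [apply Rabs_triang|]. lra.
Qed.

Lemma smooth_dir_deriv al z w : ball n p r z -> inRn n w ->
  derivable_pt_lim (fun t => D al (vadd z (vscale t w))) 0 (sumR n (fun i => D (i :: al) z * w i)).
Proof.
  intros Hz Hw eps Heps.
  destruct (dir_deriv_trunc al z w Hz Hw n (le_n n) (eps / 2) ltac:(lra)) as [del [Hdel Hd]].
  exists (mkposreal del Hdel). intros h Hh Hh2. simpl in Hh2. specialize (Hd h Hh2).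
  rewrite coord_trunc_full in Hd by auto. rewrite Rplus_0_l.
  replace (vadd z (vscale 0 w)) with z by vext.
  assert (0 < Rabs h) by (apply Rabs_pos_lt; auto).
  replace ((D al (vadd z (vscale h w)) - D al z) / h - sumR n (fun i => D (i :: al) z * w i))
    with ((D al (vadd z (vscale h w)) - D al z - h * sumR n (fun i => D (i :: al) z * w i)) / h)
    by (field; auto).
  unfold Rdiv. rewrite Rabs_mult, Rabs_inv.
  apply Rle_lt_trans with (eps / 2 * Rabs h * / Rabs h).
  - apply Rmult_le_compat_r; auto. left; apply Rinv_0_lt_compat; auto.
  - replace (eps / 2 * Rabs h * / Rabs h) with (eps / 2) by (field; lra). lra.
Qed.

Lemma smooth_second_dir_deriv z w : ball n p r z -> inRn n w ->
  derivable_pt_lim (fun t => sumR n (fun i => D [i] (vadd z (vscale t w)) * w i)) 0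
    (sumR n (fun i => sumR n (fun j => D [j; i] z * w i * w j))).
Proof.
  intros Hz Hw. eapply dlim_eq.
  - apply (dlim_sum n (fun i t => D [i] (vadd z (vscale t w)) * w i)). intros i Hi.
    apply (dlim_mult (fun t => D [i] (vadd z (vscale t w))) (fun _ => w i)); [|apply dlim_const].
    apply smooth_dir_deriv; auto.
  - apply sumR_ext. intros i Hi. rewrite Rmult_0_r, Rplus_0_r, Rmult_comm, <- sumR_scale.
    replace (vadd z (vscale 0 w)) with z by vext. apply sumR_ext; intros; ring.
Qed.

End SmoothFamily.

(** * Strict convexity *)

Definition in_closure n (Om : vec -> Prop) (z : vec) : Prop :=
  forall eps, 0 < eps -> exists y, Om y /\ vdist n y z < eps.

Section BoundaryChart.

Variables (n : nat) (Om : vec -> Prop) (m : vec) (r : R) (D : list nat -> vec -> R).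
Hypothesis Om_open : is_open n Om.
Hypothesis D_smooth : smooth_family n (ball n m r) D.
Hypothesis D_defines : forall x, ball n m r x -> (Om x <-> D nil x < 0).

Lemma defining_fun_nonpos_closure z : ball n m r z -> in_closure n Om z -> D nil z <= 0.
Proof.
  intros Hz Hzc. apply Rnot_lt_le. intro Hpos.
  destruct (proj1 (D_smooth nil z Hz) (D nil z) Hpos) as [del [Hdel Hcont]].
  destruct Hz as [HzR Hzd].
  destruct (Hzc (Rmin del (r - vdist n z m))) as [y [Hy Hyd]]; [apply Rmin_pos; lra|].
  pose proof (Rmin_l del (r - vdist n z m)). pose proof (Rmin_r del (r - vdist n z m)).
  assert (HyR : inRn n y) by apply (Om_open y Hy).
  assert (D nil y < 0).
  { apply D_defines; auto. split; auto. pose proof (vdist_triangle n y z m). lra. }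
  assert (Hyz : ball n z del y) by (split; auto; lra).
  specialize (Hcont y Hyz). unfold Rabs in Hcont; dcases; lra.
Qed.

Lemma defining_fun_boundary_zero : 0 < r -> boundary n Om m -> D nil m = 0.
Proof.
  intros Hr [HmR Hmb].
  pose proof (proj1 (D_smooth nil m (ball_center n m r HmR Hr))) as Hcont.
  destruct (Rtotal_order (D nil m) 0) as [Hlt|[Heq|Hgt]]; auto; exfalso.
  - destruct (Hcont (- D nil m) ltac:(lra)) as [del [Hdel Hd]].
    pose proof (Rmin_l del r). pose proof (Rmin_r del r).
    destruct (Hmb (Rmin del r) ltac:(apply Rmin_pos; lra)) as [_ [y [HyR [Hny Hyd]]]].
    assert (~ D nil y < 0) by (intro Hneg; apply Hny, D_defines; auto; split; auto; lra).
    assert (Hym : ball n m del y) by (split; auto; lra).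
    specialize (Hd y Hym). unfold Rabs in Hd; dcases; lra.
  - destruct (Hcont (D nil m) ltac:(lra)) as [del [Hdel Hd]].
    pose proof (Rmin_l del r). pose proof (Rmin_r del r).
    destruct (Hmb (Rmin del r) ltac:(apply Rmin_pos; lra)) as [[y [Hy Hyd]] _].
    assert (HyR : inRn n y) by apply (Om_open y Hy).
    assert (D nil y < 0) by (apply D_defines; auto; split; auto; lra).
    assert (Hym : ball n m del y) by (split; auto; lra).
    specialize (Hd y Hym). unfold Rabs in Hd; dcases; lra.
Qed.

End BoundaryChart.

(* The defining function [g] restricted to the chord [m + tau w] would be [<= 0] with a local
   maximum [0] at [m], yet [g'(0) = 0] makes [w] tangent, where uniform convexity gives [g'' > 0]. *)
Lemma uniformly_convex_no_flat_chord n Om p p' : is_open n Om ->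
  smooth_uniformly_convex_boundary n Om -> inRn n p -> inRn n p' -> p <> p' ->
  (forall s, 0 <= s <= 1 -> in_closure n Om (vadd (vscale (1 - s) p) (vscale s p'))) ->
  ~ boundary n Om (vadd (vscale (1 - / 2) p) (vscale (/ 2) p')).
Proof.
  intros Ho [c [Hc Hb]] HpR Hp'R Hpp' Hcl Hmb.
  set (w := vsub p' p) in *. set (m := vadd (vscale (1 - / 2) p) (vscale (/ 2) p')) in *.
  assert (HwR : inRn n w) by (apply inRn_sub; auto).
  assert (HmR : inRn n m) by apply Hmb.
  destruct (Hb m Hmb) as [r [D [Hr [Hsm [[i0 [Hi0 Hgrad]] [Hdef Hconv]]]]]].
  set (nw := vnorm n w). assert (Hnw : 0 < nw) by (apply (vdist_gt0 n p p'); auto).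
  pose proof (Rmin_l (/ 2) (r / (2 * (nw + 1)))). pose proof (Rmin_r (/ 2) (r / (2 * (nw + 1)))).
  set (tau0 := Rmin (/ 2) (r / (2 * (nw + 1)))) in *.
  assert (Htau0 : 0 < tau0) by (apply Rmin_pos; [lra | apply Rdiv_lt_0_compat; lra]).
  assert (Hball : forall tau, Rabs tau <= tau0 -> ball n m r (vadd m (vscale tau w))).
  { intros tau Htau. apply ball_along; auto. fold nw. pose proof (Rabs_pos tau).
    apply Rle_lt_trans with (r / (2 * (nw + 1)) * (nw + 1)); [nra|].
    replace (r / (2 * (nw + 1)) * (nw + 1)) with (r / 2) by (field; lra). lra. }
  set (g := fun tau => D nil (vadd m (vscale tau w))).
  set (G := fun tau => sumR n (fun i => D [i] (vadd m (vscale tau w)) * w i)).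
  set (Q := sumR n (fun i => sumR n (fun j => D [j; i] m * w i * w j))).
  assert (Hg0 : g 0 = 0).
  { unfold g. replace (vadd m (vscale 0 w)) with m by vext. apply (defining_fun_boundary_zero n Om m r D); auto. }
  assert (Hgle : forall tau, Rabs tau <= tau0 -> g tau <= g 0).
  { intros tau Htau. rewrite Hg0. apply (defining_fun_nonpos_closure n Om m r D); auto.
    replace (vadd m (vscale tau w)) with (vadd (vscale (1 - (/ 2 + tau)) p) (vscale (/ 2 + tau) p'))
      by (unfold m, w; vext).
    apply Hcl. unfold Rabs in Htau; dcases; lra. }
  assert (Hg' : forall tau, Rabs tau <= tau0 -> derivable_pt_lim g tau (G tau)).
  { intros tau Htau. apply dlim_shift. eapply derivable_pt_lim_ext.
    2: apply (smooth_dir_deriv n m r D Hsm nil (vadd m (vscale tau w)) w (Hball tau Htau) HwR).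
    intros s. unfold g. f_equal. vext. }
  pose proof (smooth_second_dir_deriv n m r D Hsm m w (ball_center n m r HmR Hr) HwR) as HG'.
  assert (HG0 : G 0 = 0) by (apply (local_max_deriv_zero g (G 0) tau0); auto; apply Hg'; rewrite Rabs_R0; lra).
  assert (HQ : 0 < Q).
  { assert (Htan : sumR n (fun i => D [i] m * w i) = 0).
    { rewrite <- HG0. unfold G. replace (vadd m (vscale 0 w)) with m by vext. auto. }
    specialize (Hconv w HwR Htan).
    pose proof (vnorm_gt0_of_coord n (fun i => D [i] m) i0 Hi0 Hgrad).
    assert (0 < dot n w w) by (rewrite <- vnorm_sq; fold nw; nra).
    assert (0 < c * vnorm n (fun i => D [i] m) * dot n w w) by (repeat apply Rmult_lt_0_compat; auto).
    unfold Q. lra. }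
  destruct (second_deriv_pos_increase g G Q tau0 Htau0 Hg' HG' HG0 HQ) as [t [Ht Hgt]].
  specialize (Hgle t ltac:(rewrite Rabs_right; lra)). lra.
Qed.

Definition midpoint (x y : vec) : vec := vadd (vscale (1 - / 2) x) (vscale (/ 2) y).

Lemma bounded_pairs_subseq_cv n (Om : vec -> Prop) (xs ys : nat -> vec) :
  bounded_set n Om -> (forall k, Om (xs k)) -> (forall k, Om (ys k)) ->
  exists idx p p', (forall k, (k <= idx k)%nat) /\ inRn n p /\ inRn n p' /\
    vseq_cv n (fun k => xs (idx k)) p /\ vseq_cv n (fun k => ys (idx k)) p'.
Proof.
  intros [B HB] Hxs Hys.
  destruct (bounded_vseq_subseq_cv n xs B) as [f [p [Hf [Hp Hcvx]]]]; [intros; apply HB; auto|].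
  destruct (bounded_vseq_subseq_cv n (fun k => ys (f k)) B) as [g [p' [Hg [Hp' Hcvy]]]];
    [intros; apply HB; auto|].
  exists (fun k => f (g k)), p, p'. repeat split; auto.
  - apply (strict_mono_ge_id (fun k => f (g k))), strict_mono_comp; auto.
  - apply (vseq_cv_subseq n (fun k => xs (f k))); auto. apply strict_mono_ge_id; auto.
Qed.

Lemma limit_segment_in_closure n Om X Y p q : convex_set Om ->
  (forall k, Om (X k) /\ Om (Y k)) -> vseq_cv n X p -> vseq_cv n Y q ->
  forall s, 0 <= s <= 1 -> in_closure n Om (vadd (vscale (1 - s) p) (vscale s q)).
Proof.
  intros Hc HXY HX HY s Hs eps Heps.
  destruct (vseq_cv_convex_comb n X Y p q s Hs HX HY eps Heps) as [K HK].
  exists (vadd (vscale (1 - s) (X K)) (vscale s (Y K))).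
  split; [apply Hc; try apply HXY; auto | apply HK; lia].
Qed.

Section Midpoint.

Variables (n : nat) (Om : vec -> Prop) (rho : vec -> R) (d : R).
Hypothesis Om_open : is_open n Om.
Hypothesis Om_bounded : bounded_set n Om.
Hypothesis Om_convex : convex_set Om.
Hypothesis Om_unif_convex : smooth_uniformly_convex_boundary n Om.
Hypothesis rho_dist : dist_to_boundary n Om rho.

Lemma midpoint_limit_boundary X Y p q : (forall k, Om (X k) /\ Om (Y k)) ->
  (forall k, rho (midpoint (X k) (Y k)) < / (INR k + 1)) ->
  vseq_cv n X p -> vseq_cv n Y q -> inRn n p -> inRn n q -> boundary n Om (midpoint p q).
Proof.
  intros HXY Hrho HX HY Hp Hq.
  split; [apply inRn_add; apply inRn_scale; auto|]. intros r Hr. split.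
  { apply (limit_segment_in_closure n Om X Y p q Om_convex HXY HX HY); lra. }
  destruct (vseq_cv_convex_comb n X Y p q (/ 2) ltac:(lra) HX HY (r / 2) ltac:(lra)) as [K1 HK1].
  destruct (inv_INR_succ_small (r / 4) ltac:(lra)) as [K2 HK2].
  set (k := Nat.max K1 K2). specialize (HK1 k ltac:(lia)). specialize (HK2 k ltac:(lia)).
  destruct (HXY k) as [HXk HYk]. specialize (Hrho k).
  assert (HmO : Om (midpoint (X k) (Y k))) by (apply Om_convex; auto; lra).
  destruct (boundary_near n Om rho rho_dist _ (r / 4) HmO ltac:(lra)) as [z [[_ Hz] Hzd]].
  destruct (Hz (r / 4) ltac:(lra)) as [_ [y [HyR [Hny Hyd]]]].
  exists y. split; auto. split; auto.
  pose proof (vdist_triangle n y z (midpoint p q)).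
  pose proof (vdist_triangle n z (midpoint (X k) (Y k)) (midpoint p q)).
  rewrite (vdist_sym n z (midpoint (X k) (Y k))) in *. unfold midpoint in *. lra.
Qed.

(* A limit of almost-diametral pairs whose midpoints approach the boundary would span a chord
   of the closure through a boundary point, which uniform convexity forbids. *)
Lemma rho_midpoint_far_pairs_ge : 0 < d ->
  exists del m0, 0 < del /\ 0 < m0 /\
    forall x y, Om x -> Om y -> d - del <= vdist n y x -> m0 <= rho (midpoint x y).
Proof.
  intros Hd. apply NNPP. intro Hno.
  assert (Hpairs : forall k, exists xy : vec * vec, Om (fst xy) /\ Om (snd xy) /\
     d - / (INR k + 1) <= vdist n (snd xy) (fst xy) /\ rho (midpoint (fst xy) (snd xy)) < / (INR k + 1)).
  { intro k. apply NNPP. intro Hn. apply Hno.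
    exists (/ (INR k + 1)), (/ (INR k + 1)). split; [apply inv_INR_succ_pos|].
    split; [apply inv_INR_succ_pos|]. intros x y Hx Hy Hxy. apply Rnot_lt_le. intro Hlt.
    apply Hn. exists (x, y). simpl; auto. }
  set (xy := fun k => proj1_sig (constructive_indefinite_description _ (Hpairs k))).
  assert (Hxy : forall k, Om (fst (xy k)) /\ Om (snd (xy k)) /\
     d - / (INR k + 1) <= vdist n (snd (xy k)) (fst (xy k)) /\
     rho (midpoint (fst (xy k)) (snd (xy k))) < / (INR k + 1)).
  { intros k. unfold xy. destruct constructive_indefinite_description; simpl; auto. }
  destruct (bounded_pairs_subseq_cv n Om (fun k => fst (xy k)) (fun k => snd (xy k)) Om_bounded)
    as [idx [p [p' [Hidx [HpR [Hp'R [Hcvx Hcvy]]]]]]]; try apply Hxy.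
  set (X := fun k => fst (xy (idx k))). set (Y := fun k => snd (xy (idx k))).
  change (vseq_cv n X p) in Hcvx. change (vseq_cv n Y p') in Hcvy.
  assert (HXY : forall k, Om (X k) /\ Om (Y k) /\ d - / (INR k + 1) <= vdist n (Y k) (X k) /\
                          rho (midpoint (X k) (Y k)) < / (INR k + 1)).
  { intros k. destruct (Hxy (idx k)) as [? [? [? ?]]]. pose proof (inv_INR_succ_le _ _ (Hidx k)).
    unfold X, Y. repeat split; auto; lra. }
  assert (Hpp' : p <> p').
  { intros <-. destruct (Hcvx (d / 3) ltac:(lra)) as [K1 HK1]. destruct (Hcvy (d / 3) ltac:(lra)) as [K2 HK2].
    destruct (inv_INR_succ_small (d / 3) ltac:(lra)) as [K3 HK3].
    set (k := Nat.max K1 (Nat.max K2 K3)).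
    specialize (HK1 k ltac:(lia)). specialize (HK2 k ltac:(lia)). specialize (HK3 k ltac:(lia)).
    destruct (HXY k) as [_ [_ [Hfar _]]].
    pose proof (vdist_triangle n (Y k) p (X k)). rewrite (vdist_sym n p (X k)) in *. lra. }
  apply (uniformly_convex_no_flat_chord n Om p p' Om_open Om_unif_convex HpR Hp'R Hpp').
  - apply (limit_segment_in_closure n Om X Y); auto. intros k; split; apply HXY.
  - apply (midpoint_limit_boundary X Y); auto; intros k; repeat split; apply HXY.
Qed.

End Midpoint.

(** * The gradient of [log rho^kappa] along a chord *)

Lemma tangent_slopes_monotone X rx ry al be : 0 < X -> 0 < rx -> 0 < ry ->
  ry <= rx + X * (rx * al) -> rx <= ry + (- X) * (ry * be) -> be - al <= 0.
Proof.
  intros HX Hx Hy H1 H2.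
  assert (Hpos : 0 < X * rx * ry) by (repeat apply Rmult_lt_0_compat; lra).
  assert (X * rx * ry * (be - al) <= - ((ry - rx) * (ry - rx))).
  2: { destruct (Rle_lt_dec (be - al) 0) as [|Hgt]; auto.
       pose proof (Rmult_lt_0_compat _ _ Hpos Hgt). pose proof (Rle_0_sqr (ry - rx)).
       unfold Rsqr in *. lra. }
  replace (X * rx * ry * (be - al)) with (rx * (X * (ry * be)) - ry * (X * (rx * al))) by ring.
  assert (ry * (ry - rx) <= ry * (X * (rx * al))) by (apply Rmult_le_compat_l; lra).
  assert (rx * (X * (ry * be)) <= rx * (ry - rx)) by (apply Rmult_le_compat_l; lra).
  lra.
Qed.

Lemma tangent_slopes_gap X rx ry M m0 T al be : 0 < X -> 0 < rx -> 0 < ry -> 0 < m0 ->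
  m0 <= M -> rx + ry <= T ->
  M <= rx + X / 2 * (rx * al) -> M <= ry + (- X / 2) * (ry * be) ->
  be - al <= 2 / X * (2 - 4 * m0 / T).
Proof.
  intros HX Hx Hy Hm HmM HT H1 H2.
  assert (Hal : 2 / X * (M / rx - 1) <= al).
  { apply Rmult_le_reg_r with (X / 2 * rx); [apply Rmult_lt_0_compat; lra|].
    replace (2 / X * (M / rx - 1) * (X / 2 * rx)) with (M - rx) by (field; lra). nra. }
  assert (Hbe : be <= 2 / X * (1 - M / ry)).
  { apply Rmult_le_reg_r with (X / 2 * ry); [apply Rmult_lt_0_compat; lra|].
    replace (2 / X * (1 - M / ry) * (X / 2 * ry)) with (ry - M) by (field; lra). nra. }
  assert (Hharm : 4 * m0 / T <= M / rx + M / ry).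
  { apply Rle_trans with (4 * M / (rx + ry)).
    - apply Rdiv_le_compat; lra.
    - assert (M / rx + M / ry - 4 * M / (rx + ry) = M * ((rx - ry) * (rx - ry)) / (rx * ry * (rx + ry)))
        by (field; lra).
      assert (0 <= M * ((rx - ry) * (rx - ry)) / (rx * ry * (rx + ry))).
      { apply Rmult_le_pos; [apply Rmult_le_pos; [lra | apply Rle_0_sqr]|].
        apply Rlt_le, Rinv_0_lt_compat. repeat apply Rmult_lt_0_compat; lra. }
      lra. }
  apply Rle_trans with (2 / X * (2 - (M / rx + M / ry))).
  - replace (2 / X * (2 - (M / rx + M / ry))) with (2 / X * (1 - M / ry) - 2 / X * (M / rx - 1)) by ring.
    lra.
  - apply Rmult_le_compat_l; [apply Rlt_le, Rdiv_lt_0_compat|]; lra.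
Qed.

Definition unit_dir n (x y : vec) : vec := vscale (/ vdist n y x) (vsub y x).

Section Chord.

Variables (n : nat) (Om : vec -> Prop) (rho : vec -> R) (kappa : R).
Hypothesis Om_open : is_open n Om.
Hypothesis Om_convex : convex_set Om.
Hypothesis rho_dist : dist_to_boundary n Om rho.
Hypothesis kappa_gt0 : 0 < kappa.
Variables (x y gx gy : vec).
Hypotheses (Hx : Om x) (Hy : Om y) (Hxy : x <> y).
Hypothesis Hgx : has_gradient n (fun z => ln (Rpower (rho z) kappa)) x gx.
Hypothesis Hgy : has_gradient n (fun z => ln (Rpower (rho z) kappa)) y gy.

Let X := vdist n y x.
Let e := unit_dir n x y.
Let al := dot n gx e / kappa.
Let be := dot n gy e / kappa.

Lemma chord_dist_gt0 : 0 < X.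
Proof. apply vdist_gt0; [apply (Om_open x Hx) | apply (Om_open y Hy) | auto]. Qed.

Lemma unit_dir_inRn : inRn n e.
Proof. apply inRn_scale, inRn_sub; [apply (Om_open y Hy) | apply (Om_open x Hx)]. Qed.

Lemma vnorm_unit_dir : vnorm n e = 1.
Proof.
  pose proof chord_dist_gt0. unfold e, unit_dir. rewrite vnorm_scale.
  rewrite Rabs_right by (apply Rle_ge, Rlt_le, Rinv_0_lt_compat; auto). fold (vdist n y x). fold X. field; lra.
Qed.

Lemma line_at_chord t : line_at x e (t * X) = line_at y e ((t - 1) * X).
Proof. pose proof chord_dist_gt0. unfold line_at, e, unit_dir. fold X. vext. Qed.

Lemma chord_grad_gap : dot n (vsub gy gx) e = kappa * (be - al).
Proof. rewrite dot_subl. unfold al, be. field. lra. Qed.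

Lemma chord_tangent_bound t : Om (line_at x e (t * X)) ->
  rho (line_at x e (t * X)) <= rho x + t * X * (rho x * al) /\
  rho (line_at x e (t * X)) <= rho y + (t - 1) * X * (rho y * be).
Proof.
  intros Ht. pose proof unit_dir_inRn. pose proof vnorm_unit_dir. split.
  - apply (rho_line_le_tangent n Om rho Om_open rho_dist Om_convex); auto.
  - rewrite line_at_chord in *.
    apply (rho_line_le_tangent n Om rho Om_open rho_dist Om_convex); auto.
Qed.

Lemma line_at_chord_end : line_at x e X = y.
Proof. pose proof chord_dist_gt0. unfold line_at, e, unit_dir. fold X. vext. Qed.

Lemma line_at_chord_mid : line_at x e (/ 2 * X) = midpoint x y.
Proof. pose proof chord_dist_gt0. unfold line_at, e, unit_dir, midpoint. fold X. vext. Qed.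

Lemma chord_dist_lt_diameter d : diameter n Om d -> X < d.
Proof.
  intros Hd. pose proof chord_dist_gt0.
  pose proof (rho_pos n Om rho Om_open rho_dist x Hx). pose proof (rho_pos n Om rho Om_open rho_dist y Hy).
  pose proof (dist_add_rho_le_diameter n Om rho Om_open rho_dist d x e X Hd Hx) as Hsum.
  rewrite line_at_chord_end in Hsum.
  specialize (Hsum Hy unit_dir_inRn vnorm_unit_dir ltac:(lra)). lra.
Qed.

Lemma log_rho_grad_chord_le0 : dot n (vsub gy gx) e <= 0.
Proof.
  pose proof chord_dist_gt0. pose proof (rho_pos n Om rho Om_open rho_dist x Hx).
  pose proof (rho_pos n Om rho Om_open rho_dist y Hy).
  destruct (chord_tangent_bound 1) as [Hright _]; [rewrite Rmult_1_l, line_at_chord_end; auto|].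
  destruct (chord_tangent_bound 0) as [_ Hleft];
    [rewrite Rmult_0_l, line_at0; auto|].
  rewrite Rmult_1_l, line_at_chord_end in Hright. rewrite Rmult_0_l, line_at0 in Hleft.
  rewrite chord_grad_gap.
  assert (be - al <= 0); [|nra].
  apply (tangent_slopes_monotone X (rho x) (rho y)); auto; lra.
Qed.

Lemma log_rho_grad_chord_le_mid d m0 : diameter n Om d -> 0 < m0 -> m0 <= rho (midpoint x y) ->
  dot n (vsub gy gx) e <= kappa * (2 / X * (2 - 4 * m0 / (d - X))).
Proof.
  intros Hd Hm0 Hmid. pose proof chord_dist_gt0.
  pose proof (rho_pos n Om rho Om_open rho_dist x Hx). pose proof (rho_pos n Om rho Om_open rho_dist y Hy).
  assert (HmO : Om (midpoint x y)) by (apply Om_convex; auto; lra).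
  destruct (chord_tangent_bound (/ 2)) as [Hmx Hmy]; [rewrite line_at_chord_mid; auto|].
  rewrite line_at_chord_mid in Hmx, Hmy.
  pose proof (dist_add_rho_le_diameter n Om rho Om_open rho_dist d x e X Hd Hx) as Hsum.
  rewrite line_at_chord_end in Hsum.
  specialize (Hsum Hy unit_dir_inRn vnorm_unit_dir ltac:(lra)).
  rewrite chord_grad_gap. apply Rmult_le_compat_l; [lra|].
  apply (tangent_slopes_gap X (rho x) (rho y) (rho (midpoint x y))); lra.
Qed.

End Chord.

Lemma near_chord_combine C c X g P : 0 < X -> 0 <= c -> g <= 0 -> P >= - C * X ->
  g <= P + (Rabs C + c) * X.
Proof.
  intros HX Hc Hg HP.
  assert (- (Rabs C * X) <= - C * X).
  { rewrite <- Ropp_mult_distr_l. apply Ropp_le_contravar, Rmult_le_compat_r; [lra | apply Rle_abs]. }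
  assert (0 <= c * X) by (apply Rmult_le_pos; lra). nra.
Qed.

(* With [kappa = d / (2 m0)] the singular terms [- 4 / (d - X)] on both sides cancel. *)
Lemma far_chord_combine d m0 K c X g P : 0 < m0 -> d / 2 <= X < d -> 0 <= c ->
  g <= d / (2 * m0) * (2 / X * (2 - 4 * m0 / (d - X))) -> P >= - 4 / (d - X) - K ->
  g <= P + (c + 2 * (Rabs K + 4 / m0) / d) * X.
Proof.
  intros Hm0 HX Hc Hg HP. assert (0 < d) by lra.
  replace (d / (2 * m0) * (2 / X * (2 - 4 * m0 / (d - X))))
    with (2 * d / (m0 * X) - 4 * (d / X) / (d - X)) in Hg by (field; lra).
  assert (2 * d / (m0 * X) <= 4 / m0).
  { apply Rmult_le_reg_r with (m0 * X); [apply Rmult_lt_0_compat; lra|].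
    replace (2 * d / (m0 * X) * (m0 * X)) with (2 * d) by (field; lra).
    replace (4 / m0 * (m0 * X)) with (4 * X) by (field; lra). lra. }
  assert (4 / (d - X) <= 4 * (d / X) / (d - X)).
  { apply Rdiv_le_compat; try lra.
    replace (4 * (d / X)) with (4 + 4 * ((d - X) / X)) by (field; lra).
    assert (0 <= (d - X) / X) by (apply Rlt_le, Rdiv_lt_0_compat; lra). lra. }
  assert (Rabs K + 4 / m0 <= 2 * (Rabs K + 4 / m0) / d * X).
  { apply Rle_trans with (2 * (Rabs K + 4 / m0) / d * (d / 2)); [right; field; lra|].
    apply Rmult_le_compat_l; [|lra].
    apply Rmult_le_pos; [pose proof (Rabs_pos K); assert (0 < 4 / m0) by (apply Rdiv_lt_0_compat; lra); lra|].
    apply Rlt_le, Rinv_0_lt_compat; lra. }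
  pose proof (Rle_abs K). replace (- 4 / (d - X)) with (- (4 / (d - X))) in HP by (field; lra).
  assert (0 <= c * X) by (apply Rmult_le_pos; lra). nra.
Qed.

Theorem propositionB2 (n : nat) (Om : vec -> Prop) (d : R) (rho : vec -> R)
  (Hopen : is_open n Om) (Hne : exists x, Om x) (Hbd : bounded_set n Om)
  (Hconv : convex_set Om) (Hbdry : smooth_uniformly_convex_boundary n Om)
  (Hd : diameter n Om d) (Hrho : dist_to_boundary n Om rho) :
  exists kappa, 0 < kappa /\
  forall (V phi dphi ddphi : R -> R) (lam : R),
    C1_on (- (d / 2)) (d / 2) V ->
    (forall s, - (d / 2) <= s <= d / 2 -> V (- s) = V s) ->
    dirichlet_eigenpair (d / 2) V lam phi dphi ddphi ->
    (forall s, - (d / 2) < s < d / 2 -> 0 < phi s) ->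
    (forall lam' u du ddu, dirichlet_eigenpair (d / 2) V lam' u du ddu -> lam <= lam') ->
    exists c0, forall (x y gx gy : vec),
      Om x -> Om y -> x <> y ->
      has_gradient n (fun z => ln (Rpower (rho z) kappa)) x gx ->
      has_gradient n (fun z => ln (Rpower (rho z) kappa)) y gy ->
      dot n (vsub gy gx) (vscale (/ vdist n y x) (vsub y x))
        <= Phi_of phi dphi (vdist n y x) + c0 * vdist n y x.
Proof.
  destruct (Rle_lt_dec d 0) as [Hd0|Hd0].
  { exists 1. split; [lra|]. intros V phi dphi ddphi lam _ _ _ _ _. exists 0.
    intros x y gx gy Hx Hy Hxy _ _. exfalso.
    pose proof (vdist_gt0 n x y (proj1 (Hopen x Hx)) (proj1 (Hopen y Hy)) Hxy).
    pose proof (vdist_le_diameter n Om d y x Hd Hy Hx). lra. }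
  destruct (rho_midpoint_far_pairs_ge n Om rho d Hopen Hbd Hconv Hbdry Hrho Hd0)
    as [del [m0 [Hdel [Hm0 Hmid]]]].
  set (kappa := d / (2 * m0)). assert (Hkappa : 0 < kappa) by (apply Rdiv_lt_0_compat; lra).
  exists kappa. split; auto. intros V phi dphi ddphi lam HV Heven Heig Hpos _.
  destruct (Phi_ge_near_diameter d lam V phi dphi ddphi Hd0 HV Heven Heig Hpos) as [eta [K [Heta HK]]].
  set (b := d - Rmin del (Rmin eta (d / 2))).
  assert (Hb : d / 2 <= b < d /\ d - del <= b /\ d - eta <= b)
    by (unfold b, Rmin; dcases; lra).
  destruct (Phi_ge_linear d lam V phi dphi ddphi Hd0 HV Heven Heig Hpos b ltac:(lra)) as [C HC].
  exists (Rabs C + 2 * (Rabs K + 4 / m0) / d). intros x y gx gy Hx Hy Hxy Hgx Hgy.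
  pose proof (chord_dist_gt0 n Om Hopen x y Hx Hy Hxy) as HX.
  pose proof (chord_dist_lt_diameter n Om rho Hopen Hrho x y Hx Hy Hxy d Hd) as HXd.
  destruct (Rle_lt_dec (vdist n y x) b) as [Hnear|Hfar].
  - apply near_chord_combine; [lra | | | apply HC; lra].
    + apply Rmult_le_pos; [|apply Rlt_le, Rinv_0_lt_compat; lra].
      pose proof (Rabs_pos K). assert (0 < 4 / m0) by (apply Rdiv_lt_0_compat; lra). lra.
    + apply (log_rho_grad_chord_le0 n Om rho kappa Hopen Hconv Hrho Hkappa); auto.
  - apply (far_chord_combine d m0 K); [lra | lra | apply Rabs_pos | | apply HK; lra].
    apply (log_rho_grad_chord_le_mid n Om rho kappa Hopen Hconv Hrho Hkappa); auto.
    apply Hmid; auto; lra.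
Qed.
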